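(* Let $\mathfrak g=\mathfrak{sl}_5(\mathbb C)$ with simple roots $\alpha_1,\dots,\alpha_4$. Let $e=X_{\alpha_1+\alpha_2}+X_{\alpha_2+\alpha_3}+X_{\alpha_3+\alpha_4}$, a generator of the nilpotent orbit with partition $(3,2)$, and let $(h^+,e,f)$ be an $\mathfrak{sl}_2$-triple. This orbit is conormal. Nevertheless, for the $\operatorname{ad}h^+$-invariant complement $\mathfrak n_f=\operatorname{Im}\operatorname{ad}f$ of $\mathfrak g^e$ (so that $\mathfrak n_f^\perp=\mathfrak g^f$), the transverse Poisson structure on $N_f=e+\mathfrak g^f$ is polynomial of degree $4$; in particular, it is not quadratic.
   Context: $(H_\alpha,X_\alpha,X_{-\alpha})$ denote Chevalley basis elements and $K$ is the Killing form. An orbit is conormal if the centralizer $\mathfrak g^e$ admits a complement that is a Lie subalgebra. Transverse Poisson structure. Choose a basis $Z_1,\dots,Z_k$ of $\mathfrak g^e$ and a basis $X_1,\dots,X_p$ of the complement $\mathfrak n$. Let $(\overline{Z_i},\overline{X_j})$ be the $K$-dual basis, and identify $\mathfrak n^\perp$ with $\mathbb C^k$ via $q\mapsto\sum_s q_s\overline{Z_s}$. Define: - $C_N(q)_{l,m}=K(e+\sum_s q_s\overline{Z_s},[X_l,X_m])$; - $D_N(q)_{l,j}=K(\sum_s q_s\overline{Z_s},[X_l,Z_j])$; - $A_N(q)_{i,j}=K(\sum_s q_s\overline{Z_s},[Z_i,Z_j])$. Then $\Lambda_N(q)=A_N+{}^tD_N\,C_N^{-1}D_N$. For $\operatorname{ad}h^+$-invariant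 complements it is polynomial in $q$, and its degree is the maximal degree of its entries. It is called quadratic if this degree is at most $2$. *)

From HB Require Import structures.
From mathcomp Require Import all_boot all_order all_algebra.
From mathcomp Require Import mpoly.
Set Implicit Arguments.
Unset Strict Implicit.
Unset Printing Implicit Defensive.
Import Order.TTheory GRing.Theory Num.Theory.
Local Open Scope ring_scope.

Section SL5.
Variable C : numClosedFieldType. (* stands for the complex numbers *)

Definition in_sl5 (Y : 'M[C]_5) : Prop := \tr Y = 0.

(* Lie bracket and Killing form of sl_5: K(A,B) = 2n tr(AB) with n = 5 *)
Definition lie (A B : 'M[C]_5) : 'M[C]_5 := A *m B - B *m A.
Definition killing (A B : 'M[C]_5) : C := 10%:R * \tr (A *m B).

(* Chevalley basis element X_{eps_i - eps_j} = E_{ij} (0-based indices) *)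
Definition ord5 (k : nat) : 'I_5 := inord k.
Definition Xroot (i j : nat) : 'M[C]_5 := delta_mx (ord5 i) (ord5 j).

(* e = X_{a1+a2} + X_{a2+a3} + X_{a3+a4} = E_13 + E_24 + E_35 *)
Definition e32 : 'M[C]_5 := Xroot 0 2 + Xroot 1 3 + Xroot 2 4.

Definition is_sl2_triple (h e f : 'M[C]_5) : Prop :=
  [/\ in_sl5 h, in_sl5 e, in_sl5 f &
      [/\ lie h e = 2%:R *: e, lie h f = - (2%:R *: f) & lie e f = h]].

Definition centralizer (e : 'M[C]_5) (Y : 'M[C]_5) : Prop :=
  in_sl5 Y /\ lie Y e = 0.

Definition image_ad (f : 'M[C]_5) (Y : 'M[C]_5) : Prop :=
  exists W, in_sl5 W /\ Y = lie f W.

Definition is_basis_of (m : nat) (S : 'M[C]_5 -> Prop) (B : 'I_m -> 'M[C]_5) : Prop :=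
  [/\ forall i, S (B i),
      forall c : 'I_m -> C, \sum_i c i *: B i = 0 -> forall i, c i = 0
    & forall Y, S Y -> exists c : 'I_m -> C, Y = \sum_i c i *: B i].

Definition lin_subspace (S : 'M[C]_5 -> Prop) : Prop :=
  S 0 /\ forall (a : C) x y, S x -> S y -> S (a *: x + y).

Definition is_complement_in (G S T : 'M[C]_5 -> Prop) : Prop :=
  (forall Y, G Y -> exists a b, [/\ S a, T b & Y = a + b]) /\
  (forall Y, S Y -> T Y -> Y = 0).

Definition conormal (e : 'M[C]_5) : Prop :=
  exists n : 'M[C]_5 -> Prop,
    [/\ lin_subspace n, (forall Y, n Y -> in_sl5 Y),
        is_complement_in in_sl5 (centralizer e) n
      & forall a b, n a -> n b -> n (lie a b)].

(* Transverse Poisson structure data, for bases Z (of g^e), X (of the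
   complement) and the K-dual elements Zbar *)
Section Transverse.
Variables (k p : nat) (e : 'M[C]_5) (Z : 'I_k -> 'M[C]_5) (X : 'I_p -> 'M[C]_5)
          (Zbar : 'I_k -> 'M[C]_5).

Definition qpoint (q : 'I_k -> C) : 'M[C]_5 := \sum_s q s *: Zbar s.

Definition C_N (q : 'I_k -> C) : 'M[C]_p :=
  \matrix_(l, m) killing (e + qpoint q) (lie (X l) (X m)).
Definition D_N (q : 'I_k -> C) : 'M[C]_(p, k) :=
  \matrix_(l, j) killing (qpoint q) (lie (X l) (Z j)).
Definition A_N (q : 'I_k -> C) : 'M[C]_k :=
  \matrix_(i, j) killing (qpoint q) (lie (Z i) (Z j)).
Definition Lambda_N (q : 'I_k -> C) : 'M[C]_k :=
  A_N q + (D_N q)^T *m invmx (C_N q) *m D_N q.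

End Transverse.

(* (Zbar, Xbar) is the K-dual basis of (Z, X); only Zbar enters *)
Definition is_dual_Zpart (k p : nat) (Z : 'I_k -> 'M[C]_5) (X : 'I_p -> 'M[C]_5)
  (Zbar : 'I_k -> 'M[C]_5) : Prop :=
  [/\ forall s, in_sl5 (Zbar s),
      forall s j, killing (Zbar s) (Z j) = (s == j)%:R
    & forall s l, killing (Zbar s) (X l) = 0].

End SL5.

(* Every sl2-triple through e is conjugate to the standard triple
   (e, h_std, f_std) by an element centralizing e, and the transverse data
   (C_N, A_N, D_N, Lambda_N) are invariant under such a conjugation, so we may
   take f = f_std.  Then Lambda_N(q)_ij = K(x, [v_i, Z_j]), where
   x = e + sum_s q_s Zbar_s lies in the slice e + g^f and v_i is Z_i corrected
   inside Im ad f to become orthogonal to Im ad f for K(x, [_, _]); the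
   nondegeneracy of that pairing is the invertibility of C_N.  Correcting
   each basis vector of g^e explicitly gives v_i, hence Lambda_N, as
   polynomials in q, of degree at most 4.  Along the line of the diagonal
   element of g^f an entry of Lambda_N is c t^4 + c' t^2 with c a nonzero
   multiple of a 2x2 minor of the invertible coordinate matrix of the Z_i, so
   the degree is exactly 4.  Conormality: the traceless matrices with vanishing
   row 0 and vanishing entries (1, j), j >= 2, form a subalgebra complementary
   to g^e. *)

From HB Require Import structures.
From mathcomp Require Import all_boot all_order all_algebra.
From mathcomp Require Import mpoly.
From mathcomp Require Import ring zify.
Import GRing.Theory Num.Theory.
Local Open Scope ring_scope.
Set Implicit Arguments.
Unset Strict Implicit.
Unset Printing Implicit Defensive.

Section Entrywise.
Variable C : numClosedFieldType.
Implicit Types F G : nat -> nat -> C.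

Definition mx5 F : 'M[C]_5 := \matrix_(i, j) F i j.

Definition mul5 F G (i j : nat) : C :=
  F i 0%N * G 0%N j + F i 1%N * G 1%N j + F i 2%N * G 2%N j
  + F i 3%N * G 3%N j + F i 4%N * G 4%N j.

Lemma mx5E F i j : (i < 5)%N -> (j < 5)%N -> mx5 F (inord i) (inord j) = F i j.
Proof. by move=> hi hj; rewrite mxE !inordK. Qed.

Lemma big_ord5 (u : 'I_5 -> C) :
  \sum_(k < 5) u k = u (inord 0) + u (inord 1) + u (inord 2) + u (inord 3) + u (inord 4).
Proof.
rewrite !big_ord_recr big_ord0 /= add0r.
by congr (_ + _ + _ + _ + _); congr u; apply/val_inj; rewrite /= inordK.
Qed.

Lemma mulmx5 F G : mx5 F *m mx5 G = mx5 (mul5 F G).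
Proof. by apply/matrixP => i j; rewrite !mxE big_ord5 !mxE /mul5 !inordK. Qed.

Lemma lie_mx5 F G : lie (mx5 F) (mx5 G) = mx5 (fun i j => mul5 F G i j - mul5 G F i j).
Proof. by rewrite /lie !mulmx5; apply/matrixP => i j; rewrite !mxE. Qed.

Lemma mxtrace_mx5 F :
  \tr (mx5 F) = F 0%N 0%N + F 1%N 1%N + F 2%N 2%N + F 3%N 3%N + F 4%N 4%N.
Proof. by rewrite /mxtrace big_ord5 !mxE !inordK. Qed.

Lemma mx5_ext F G :
  (forall i j, (i < 5)%N -> (j < 5)%N -> F i j = G i j) -> mx5 F = mx5 G.
Proof. by move=> h; apply/matrixP => i j; rewrite !mxE h. Qed.

Lemma mx5_inj F G : mx5 F = mx5 G ->
  [/\ [/\ F 0 0 = G 0 0, F 0 1 = G 0 1, F 0 2 = G 0 2, F 0 3 = G 0 3 & F 0 4 = G 0 4],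
      [/\ F 1 0 = G 1 0, F 1 1 = G 1 1, F 1 2 = G 1 2, F 1 3 = G 1 3 & F 1 4 = G 1 4],
      [/\ F 2 0 = G 2 0, F 2 1 = G 2 1, F 2 2 = G 2 2, F 2 3 = G 2 3 & F 2 4 = G 2 4],
      [/\ F 3 0 = G 3 0, F 3 1 = G 3 1, F 3 2 = G 3 2, F 3 3 = G 3 3 & F 3 4 = G 3 4]
    & [/\ F 4 0 = G 4 0, F 4 1 = G 4 1, F 4 2 = G 4 2, F 4 3 = G 4 3 & F 4 4 = G 4 4]].
Proof.
move=> eFG; have E i j : (i < 5)%N -> (j < 5)%N -> F i j = G i j.
  by move=> hi hj; rewrite -mx5E // eFG mx5E.
by do !split; apply: E.
Qed.

Lemma addmx5 F G : mx5 F + mx5 G = mx5 (fun i j => F i j + G i j).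
Proof. by apply/matrixP => i j; rewrite !mxE. Qed.
Lemma submx5 F G : mx5 F - mx5 G = mx5 (fun i j => F i j - G i j).
Proof. by apply/matrixP => i j; rewrite !mxE. Qed.
Lemma scalemx5 (a : C) F : a *: mx5 F = mx5 (fun i j => a * F i j).
Proof. by apply/matrixP => i j; rewrite !mxE. Qed.
Lemma oppmx5 F : - mx5 F = mx5 (fun i j => - F i j).
Proof. by apply/matrixP => i j; rewrite !mxE. Qed.
Lemma mx5_0 : (0 : 'M[C]_5) = mx5 (fun _ _ => 0).
Proof. by apply/matrixP => i j; rewrite !mxE. Qed.
Lemma mx5_1 : (1%:M : 'M[C]_5) = mx5 (fun i j => (i == j)%:R).
Proof. by apply/matrixP => i j; rewrite !mxE. Qed.

(* A general matrix with its 25 entries as independent variables: stating a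
   computation for [mx5_of a00 ... a44] lets [subst] eliminate entries. *)
Definition mx5_of (a00 a01 a02 a03 a04 a10 a11 a12 a13 a14 a20 a21 a22 a23 a24
    a30 a31 a32 a33 a34 a40 a41 a42 a43 a44 : C) : 'M[C]_5 :=
  mx5 (fun i j => match i, j with
  | 0%N, 0%N => a00 | 0%N, 1%N => a01 | 0%N, 2%N => a02 | 0%N, 3%N => a03 | 0%N, 4%N => a04
  | 1%N, 0%N => a10 | 1%N, 1%N => a11 | 1%N, 2%N => a12 | 1%N, 3%N => a13 | 1%N, 4%N => a14
  | 2%N, 0%N => a20 | 2%N, 1%N => a21 | 2%N, 2%N => a22 | 2%N, 3%N => a23 | 2%N, 4%N => a24
  | 3%N, 0%N => a30 | 3%N, 1%N => a31 | 3%N, 2%N => a32 | 3%N, 3%N => a33 | 3%N, 4%N => a34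
  | 4%N, 0%N => a40 | 4%N, 1%N => a41 | 4%N, 2%N => a42 | 4%N, 3%N => a43 | 4%N, 4%N => a44
  | _, _ => 0 end).

Lemma mx5_ind (P : 'M[C]_5 -> Prop) :
  (forall a00 a01 a02 a03 a04 a10 a11 a12 a13 a14 a20 a21 a22 a23 a24
          a30 a31 a32 a33 a34 a40 a41 a42 a43 a44 : C,
     P (mx5_of a00 a01 a02 a03 a04 a10 a11 a12 a13 a14 a20 a21 a22 a23 a24
               a30 a31 a32 a33 a34 a40 a41 a42 a43 a44)) ->
  forall A, P A.
Proof.
move=> hP A; suff -> : A = mx5_of (A (inord 0) (inord 0)) (A (inord 0) (inord 1))
  (A (inord 0) (inord 2)) (A (inord 0) (inord 3)) (A (inord 0) (inord 4))
  (A (inord 1) (inord 0)) (A (inord 1) (inord 1)) (A (inord 1) (inord 2))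
  (A (inord 1) (inord 3)) (A (inord 1) (inord 4)) (A (inord 2) (inord 0))
  (A (inord 2) (inord 1)) (A (inord 2) (inord 2)) (A (inord 2) (inord 3))
  (A (inord 2) (inord 4)) (A (inord 3) (inord 0)) (A (inord 3) (inord 1))
  (A (inord 3) (inord 2)) (A (inord 3) (inord 3)) (A (inord 3) (inord 4))
  (A (inord 4) (inord 0)) (A (inord 4) (inord 1)) (A (inord 4) (inord 2))
  (A (inord 4) (inord 3)) (A (inord 4) (inord 4)) by apply: hP.
apply/matrixP => i j; rewrite mxE -[i]inord_val -[j]inord_val !inordK //.
by case: i j => [[|[|[|[|[|?]]]]] ?] [[|[|[|[|[|?]]]]] ?].
Qed.

End Entrywise.

Lemma big_ord8_nat (T : zmodType) (F : nat -> T) :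
  \sum_(k < 8) F k = F 0%N + F 1%N + F 2%N + F 3%N + F 4%N + F 5%N + F 6%N + F 7%N.
Proof. by rewrite !big_ord_recr big_ord0 /= add0r. Qed.

Lemma big_ord8 (T : zmodType) (u : 'I_8 -> T) : \sum_k u k =
  u (inord 0) + u (inord 1) + u (inord 2) + u (inord 3)
  + u (inord 4) + u (inord 5) + u (inord 6) + u (inord 7).
Proof.
rewrite !big_ord_recr big_ord0 /= add0r.
by congr (_ + _ + _ + _ + _ + _ + _ + _); congr u; apply/val_inj; rewrite /= inordK.
Qed.

Ltac case_entries := move=> [|[|[|[|[|?]]]]] [|[|[|[|[|?]]]]] // _ _.

Section Elimination.
Variable T : pzRingType.

Lemma eq_lincomb {v r L R c : T} : L = R -> v - r = c * (L - R) -> v = r.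
Proof. by move=> -> /eqP; rewrite subrr mulr0 subr_eq0 => /eqP. Qed.

Lemma eq0_lincomb1 {v E1 c1 : T} : E1 = 0 -> v = c1 * E1 -> v = 0.
Proof. by move=> -> ->; rewrite mulr0. Qed.

Lemma eq0_lincomb2 {v E1 E2 c1 c2 : T} :
  E1 = 0 -> E2 = 0 -> v = c1 * E1 + c2 * E2 -> v = 0.
Proof. by move=> -> -> ->; rewrite !mulr0 addr0. Qed.

End Elimination.

Section LieKilling.
Variable C : numClosedFieldType.
Implicit Types A B D : 'M[C]_5.

Lemma lieDl A B D : lie (A + B) D = lie A D + lie B D.
Proof. by rewrite /lie mulmxDl mulmxDr opprD addrACA. Qed.
Lemma lieDr A B D : lie D (A + B) = lie D A + lie D B.
Proof. by rewrite /lie mulmxDl mulmxDr opprD addrACA. Qed.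
Lemma lieZl (a : C) A B : lie (a *: A) B = a *: lie A B.
Proof. by rewrite /lie -scalemxAl -scalemxAr scalerBr. Qed.
Lemma lieZr (a : C) A B : lie A (a *: B) = a *: lie A B.
Proof. by rewrite /lie -scalemxAl -scalemxAr scalerBr. Qed.
Lemma lieNl A B : lie (- A) B = - lie A B.
Proof. by rewrite -scaleN1r lieZl scaleN1r. Qed.
Lemma lieNr A B : lie A (- B) = - lie A B.
Proof. by rewrite -scaleN1r lieZr scaleN1r. Qed.
Lemma lieBl A B D : lie (A - B) D = lie A D - lie B D.
Proof. by rewrite lieDl lieNl. Qed.
Lemma lieBr A B D : lie D (A - B) = lie D A - lie D B.
Proof. by rewrite lieDr lieNr. Qed.
Lemma lie0l A : lie 0 A = 0.
Proof. by rewrite /lie mul0mx mulmx0 subrr. Qed.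
Lemma lie0r A : lie A 0 = 0.
Proof. by rewrite /lie mul0mx mulmx0 subrr. Qed.
Lemma lieC A B : lie A B = - lie B A.
Proof. by rewrite /lie opprB. Qed.
Lemma lie_suml (I : finType) (F : I -> 'M[C]_5) B :
  lie (\sum_i F i) B = \sum_i lie (F i) B.
Proof. by elim/big_ind2: _ => [|? ? ? ? <- <-|//]; rewrite ?lie0l ?lieDl. Qed.
Lemma lie_sumr (I : finType) (F : I -> 'M[C]_5) B :
  lie B (\sum_i F i) = \sum_i lie B (F i).
Proof. by elim/big_ind2: _ => [|? ? ? ? <- <-|//]; rewrite ?lie0r ?lieDr. Qed.

Lemma killingDl A B D : killing (A + B) D = killing A D + killing B D.
Proof. by rewrite /killing mulmxDl mxtraceD mulrDr. Qed.
Lemma killingDr A B D : killing D (A + B) = killing D A + killing D B.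
Proof. by rewrite /killing mulmxDr mxtraceD mulrDr. Qed.
Lemma killingZl (a : C) A B : killing (a *: A) B = a * killing A B.
Proof. by rewrite /killing -scalemxAl mxtraceZ mulrCA. Qed.
Lemma killingZr (a : C) A B : killing A (a *: B) = a * killing A B.
Proof. by rewrite /killing -scalemxAr mxtraceZ mulrCA. Qed.
Lemma killingNr A B : killing A (- B) = - killing A B.
Proof. by rewrite -scaleN1r killingZr mulN1r. Qed.
Lemma killingBr A B D : killing D (A - B) = killing D A - killing D B.
Proof. by rewrite killingDr killingNr. Qed.
Lemma killing0l A : killing 0 A = 0.
Proof. by rewrite /killing mul0mx mxtrace0 mulr0. Qed.
Lemma killing0r A : killing A 0 = 0.
Proof. by rewrite /killing mulmx0 mxtrace0 mulr0. Qed.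
Lemma killingC A B : killing A B = killing B A.
Proof. by rewrite /killing mxtrace_mulC. Qed.
Lemma killing_suml (I : finType) (F : I -> 'M[C]_5) B :
  killing (\sum_i F i) B = \sum_i killing (F i) B.
Proof. by elim/big_ind2: _ => [|? ? ? ? <- <-|//]; rewrite ?killing0l ?killingDl. Qed.
Lemma killing_sumr (I : finType) (F : I -> 'M[C]_5) B :
  killing B (\sum_i F i) = \sum_i killing B (F i).
Proof. by elim/big_ind2: _ => [|? ? ? ? <- <-|//]; rewrite ?killing0r ?killingDr. Qed.

Lemma killing_lie A B D : killing A (lie B D) = killing (lie A B) D.
Proof.
rewrite /killing /lie mulmxBr mulmxBl !raddfB /= !mulmxA; congr (_ * (_ - _)).
by rewrite mxtrace_mulC mulmxA.
Qed.

Lemma in_sl5_lie A B : in_sl5 (lie A B).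
Proof. by rewrite /in_sl5 /lie raddfB /= mxtrace_mulC subrr. Qed.
Lemma in_sl50 : in_sl5 (0 : 'M[C]_5).
Proof. exact: mxtrace0. Qed.
Lemma in_sl5D A B : in_sl5 A -> in_sl5 B -> in_sl5 (A + B).
Proof. by rewrite /in_sl5 mxtraceD => -> ->; rewrite addr0. Qed.
Lemma in_sl5Z (a : C) A : in_sl5 A -> in_sl5 (a *: A).
Proof. by rewrite /in_sl5 mxtraceZ => ->; rewrite mulr0. Qed.
Lemma in_sl5N A : in_sl5 A -> in_sl5 (- A).
Proof. by rewrite /in_sl5 raddfN /= => ->; rewrite oppr0. Qed.
Lemma in_sl5_sum (I : finType) (F : I -> 'M[C]_5) :
  (forall i, in_sl5 (F i)) -> in_sl5 (\sum_i F i).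
Proof.
move=> h; elim/big_ind: _ => //; first exact: in_sl50.
by move=> ? ?; apply: in_sl5D.
Qed.

Lemma mxtrace_mul_delta (A : 'M[C]_5) (a b : 'I_5) : \tr (A *m delta_mx a b) = A b a.
Proof.
rewrite /mxtrace (bigD1 b) //= big1 ?addr0.
  rewrite mxE (bigD1 a) //= big1 ?addr0 ?mxE ?eqxx ?mulr1 //.
  by move=> k /negPf nk; rewrite mxE nk mulr0.
by move=> i /negPf ni; rewrite mxE big1 // => k _; rewrite mxE ni andbF mulr0.
Qed.

Lemma mxtrace_delta (a b : 'I_5) : \tr (delta_mx a b : 'M[C]_5) = (a == b)%:R.
Proof.
rewrite /mxtrace (bigD1 a) //= big1 ?addr0 ?mxE ?eqxx //.
by move=> i /negPf ni; rewrite mxE ni.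
Qed.

(* Pairing with the traceless [E_ab] (a != b) and [E_aa - E_bb] forces the
   off-diagonal entries to vanish and the diagonal to be constant. *)
Lemma killing_nondeg (T : 'M[C]_5) :
  in_sl5 T -> (forall V, in_sl5 V -> killing T V = 0) -> T = 0.
Proof.
move=> trT h.
have hk V : in_sl5 V -> \tr (T *m V) = 0.
  by move=> /h /eqP; rewrite mulf_eq0 pnatr_eq0 => /eqP.
have off (a b : 'I_5) : a != b -> T a b = 0.
  by move=> ab; rewrite -mxtrace_mul_delta hk // /in_sl5 mxtrace_delta eq_sym (negPf ab).
have diag (a b : 'I_5) : T a a = T b b.
  have [->//|ab] := eqVneq a b; apply/eqP; rewrite -subr_eq0 -!mxtrace_mul_delta.
  rewrite -raddfB /= -mulmxBr hk // /in_sl5 raddfB /= !mxtrace_delta !eqxx subrr.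
  by [].
apply/matrixP => a b; rewrite mxE; have [<-|ab] := eqVneq a b; last exact: off.
move: trT; rewrite /in_sl5 /mxtrace (eq_bigr (fun=> T a a)) => [|i _]; last exact: diag.
by rewrite sumr_const card_ord -mulr_natr => /eqP; rewrite mulf_eq0 pnatr_eq0 orbF => /eqP.
Qed.

End LieKilling.

Section ImageAd.
Variables (C : numClosedFieldType) (f : 'M[C]_5).
Implicit Types U V : 'M[C]_5.

Lemma image_ad0 : image_ad f 0.
Proof. by exists 0; rewrite lie0r; split; first exact: in_sl50. Qed.
Lemma image_adD U V : image_ad f U -> image_ad f V -> image_ad f (U + V).
Proof.
by case=> W1 [t1 ->] [W2 [t2 ->]]; exists (W1 + W2); rewrite lieDr; split; first exact: in_sl5D.
Qed.
Lemma image_adZ (a : C) U : image_ad f U -> image_ad f (a *: U).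
Proof. by case=> W [t ->]; exists (a *: W); rewrite lieZr; split; first exact: in_sl5Z. Qed.
Lemma image_adB U V : image_ad f U -> image_ad f V -> image_ad f (U - V).
Proof. by move=> hU hV; rewrite -scaleN1r; apply/image_adD/image_adZ. Qed.
Lemma image_ad_sum (I : finType) (F : I -> 'M[C]_5) :
  (forall i, image_ad f (F i)) -> image_ad f (\sum_i F i).
Proof.
move=> h; elim/big_ind: _ => //; first exact: image_ad0.
by move=> ? ?; apply: image_adD.
Qed.

End ImageAd.

Lemma is_basis_of_lin0 (C : numClosedFieldType) (S : 'M[C]_5 -> Prop) (m : nat)
    (B : 'I_m -> 'M[C]_5) (phi : 'M[C]_5 -> C) :
  is_basis_of S B -> (forall a U V, phi (a *: U + V) = a * phi U + phi V) ->
  (forall i, phi (B i) = 0) -> forall V, S V -> phi V = 0.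
Proof.
move=> [_ _ span] lin h V /span [c ->].
have phi0 : phi 0 = 0.
  have := lin 1 0 0; rewrite scale1r addr0 mul1r => /(congr1 (fun x => x - phi 0)).
  by rewrite addrK subrr.
elim/big_ind: _ => // [U1 U2 h1 h2|i _].
  by have := lin 1 U1 U2; rewrite scale1r mul1r h1 h2 addr0.
by have := lin (c i) (B i) 0; rewrite addr0 phi0 addr0 h mulr0.
Qed.

Inductive pexpr (K : Type) :=
  | PConst of K
  | PVar of nat
  | PAdd of pexpr K & pexpr K
  | PMul of pexpr K & pexpr K.
Arguments PVar {K}.

Declare Scope pexpr_scope.
Delimit Scope pexpr_scope with pe.
Bind Scope pexpr_scope with pexpr.
Notation "a + b" := (PAdd a b) : pexpr_scope.
Notation "a * b" := (PMul a b) : pexpr_scope.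
Notation "''v_' i" := (PVar i) (at level 8, i at level 2, format "''v_' i") : pexpr_scope.

Fixpoint peval (K : Type) (R : comNzRingType) (k : K -> R) (v : nat -> R) (e : pexpr K) : R :=
  match e with
  | PConst c => k c
  | PVar i => v i
  | PAdd a b => peval k v a + peval k v b
  | PMul a b => peval k v a * peval k v b
  end.

Fixpoint pdeg (K : Type) (e : pexpr K) : nat :=
  match e with
  | PConst _ => 0
  | PVar _ => 1
  | PAdd a b => maxn (pdeg a) (pdeg b)
  | PMul a b => pdeg a + pdeg b
  end.

Lemma eq_peval (K : Type) (R : comNzRingType) (k : K -> R) (v1 v2 : nat -> R) e :
  v1 =1 v2 -> peval k v1 e = peval k v2 e.
Proof. by move=> h; elim: e => //= [a -> b ->|a -> b ->]. Qed.

Section PexprMpoly.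
Variables (R : idomainType) (n : nat).

Lemma meval_peval (q : 'I_n -> R) (v : nat -> {mpoly R[n]}) e :
  (peval (fun c => c%:MP) v e).@[q] = peval id (fun i => (v i).@[q]) e.
Proof.
by elim: e => [c|i|a iha b ihb|a iha b ihb] /=; rewrite ?mevalC ?mevalD ?mevalM ?iha ?ihb.
Qed.

Lemma msizeM_leq (p q : {mpoly R[n]}) : (msize (p * q) <= (msize p + msize q).-1)%N.
Proof.
have [->|p0] := eqVneq p 0; first by rewrite mul0r msize0.
have [->|q0] := eqVneq q 0; first by rewrite mulr0 msize0.
by rewrite msizeM.
Qed.

(* [msize] exceeds the total degree by one. *)
Lemma msize_peval (v : nat -> {mpoly R[n]}) e :
  (forall i, msize (v i) <= 2)%N -> (msize (peval (fun c => c%:MP) v e) <= (pdeg e).+1)%N.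
Proof.
move=> hv; elim: e => [c|i|a iha b ihb|a iha b ihb] /=.
- by rewrite msizeC; case: (c != 0).
- exact: hv.
- apply: leq_trans (msizeD_le _ _) _; rewrite geq_max.
  by rewrite (leq_trans iha) ?(leq_trans ihb) // ltnS ?leq_maxl ?leq_maxr.
- apply: leq_trans (msizeM_leq _ _) _.
  have addn_pred x y a' b' : (x <= a'.+1 -> y <= b'.+1 -> (x + y).-1 <= (a' + b').+1)%N.
    by lia.
  exact: addn_pred.
Qed.

Lemma mpoly_restrict_line (p : {mpoly R[n]}) (w : 'I_n -> R) :
  exists r : {poly R}, (size r <= msize p)%N /\ forall t, p.@[fun s => t * w s] = r.[t].
Proof.
exists (\sum_(m <- msupp p) (p@_m * \prod_i w i ^+ m i) *: 'X^(mdeg m)); split.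
  apply: leq_trans (size_sum _ _ _) _; apply/bigmax_leqP_seq => m mp _.
  by apply: leq_trans (size_scale_leq _ _) _; rewrite size_polyXn msize_mdeg_lt.
move=> t; rewrite mevalE horner_sum; apply: eq_bigr => m _.
rewrite hornerZ hornerXn -mulrA; congr (_ * _).
rewrite (eq_bigr (fun i => t ^+ m i * w i ^+ m i)) => [|i _]; last by rewrite exprMn.
by rewrite big_split /= prodrXr mdegE mulrC.
Qed.

End PexprMpoly.

Lemma poly_horner_inj (R : numDomainType) (r s : {poly R}) :
  (forall t, r.[t] = s.[t]) -> r = s.
Proof.
move=> h; apply/eqP; rewrite -subr_eq0; apply/negPn/negP => nz.
have roots : all (root (r - s)) [seq i%:R | i <- iota 0 (size (r - s))].
  by apply/allP => x /mapP [i _ ->]; rewrite /root hornerD hornerN h subrr.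
have uniq_nat : uniq [seq (i%:R : R) | i <- iota 0 (size (r - s))].
  by rewrite map_inj_uniq ?iota_uniq // => a b /eqP; rewrite eqr_nat => /eqP.
by move: (max_poly_roots nz roots uniq_nat); rewrite size_map size_iota ltnn.
Qed.

Lemma unitmx_minor2 (R : fieldType) (n : nat) (M : 'M[R]_n) (a b : 'I_n) :
  a != b -> M \in unitmx -> exists i j, M i a * M j b - M i b * M j a != 0.
Proof.
move=> ab uM.
have inj (v : 'cV[R]_n) : M *m v = 0 -> v = 0.
  by move=> Mv; rewrite -(mulKmx uM v) Mv mulmx0.
have [j Mja] : exists j, M j a != 0.
  apply/existsP; apply: contraT => /existsPn Ma0.
  have : M *m (delta_mx a 0 : 'cV[R]_n) = 0.
    by rewrite -colE; apply/matrixP => i k; rewrite !mxE; apply/eqP/negbNE/Ma0.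
  move/inj/(congr1 (fun N : 'cV[R]_n => N a 0)).
  by rewrite !mxE !eqxx => /eqP; rewrite oner_eq0.
suff [i Mij] : exists i, M i a * M j b - M i b * M j a != 0 by exists i, j.
apply/existsP; apply: contraT => /existsPn minors0.
have : M *m ((delta_mx b 0 : 'cV[R]_n) - (M j b / M j a) *: delta_mx a 0) = 0.
  apply/matrixP => i k; rewrite mulmxBr -scalemxAr -!colE !mxE.
  move/negPn: (minors0 i); rewrite subr_eq0 => /eqP eq_i.
  by rewrite mulrAC [M j b * _]mulrC eq_i mulfK // subrr.
move/inj/(congr1 (fun N : 'cV[R]_n => N b 0)).
have ba : b != a by rewrite eq_sym.
by rewrite !mxE !eqxx (negPf ba) mulr0 subr0 => /eqP; rewrite oner_eq0.
Qed.

Section StandardTriple.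
Variable C : numClosedFieldType.

Definition e_std : 'M[C]_5 :=
  mx5 (fun i j => match i, j with 0%N, 2%N | 1%N, 3%N | 2%N, 4%N => 1 | _, _ => 0 end).
Definition h_std : 'M[C]_5 :=
  mx5 (fun i j => match i, j with
  | 0%N, 0%N => 2 | 1%N, 1%N => 1 | 3%N, 3%N => -1 | 4%N, 4%N => -2 | _, _ => 0 end).
Definition f_std : 'M[C]_5 :=
  mx5 (fun i j => match i, j with 2%N, 0%N | 4%N, 2%N => 2 | 3%N, 1%N => 1 | _, _ => 0 end).

Definition ge_basis (a : nat) : 'M[C]_5 :=
  match a with
  | 0%N => mx5 (fun i j => match i, j with 0%N, 3%N => 1 | _, _ => 0 end)
  | 1%N => mx5 (fun i j => match i, j with 0%N, 4%N => 1 | _, _ => 0 end)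
  | 2%N => mx5 (fun i j => match i, j with 1%N, 3%N => 1 | _, _ => 0 end)
  | 3%N => mx5 (fun i j => match i, j with 1%N, 4%N => 1 | _, _ => 0 end)
  | 4%N => mx5 (fun i j => match i, j with 0%N, 1%N | 2%N, 3%N => 1 | _, _ => 0 end)
  | 5%N => mx5 (fun i j => match i, j with 0%N, 2%N | 2%N, 4%N => 1 | _, _ => 0 end)
  | 6%N => mx5 (fun i j => match i, j with 1%N, 2%N | 3%N, 4%N => 1 | _, _ => 0 end)
  | 7%N => mx5 (fun i j => match i, j with
           | 0%N, 0%N | 2%N, 2%N | 4%N, 4%N => -2 | 1%N, 1%N | 3%N, 3%N => 3 | _, _ => 0 end)
  | _ => 0
  end.

Definition gf_basis (a : nat) : 'M[C]_5 :=
  match a with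
  | 0%N => mx5 (fun i j => match i, j with 3%N, 0%N => 1 | _, _ => 0 end)
  | 1%N => mx5 (fun i j => match i, j with 3%N, 1%N => 1 | _, _ => 0 end)
  | 2%N => mx5 (fun i j => match i, j with 1%N, 0%N => 2 | 3%N, 2%N => 1 | _, _ => 0 end)
  | 3%N => mx5 (fun i j => match i, j with 4%N, 0%N => 1 | _, _ => 0 end)
  | 4%N => mx5 (fun i j => match i, j with 4%N, 1%N => 1 | _, _ => 0 end)
  | 5%N => mx5 (fun i j => match i, j with 2%N, 0%N | 4%N, 2%N => 1 | _, _ => 0 end)
  | 6%N => mx5 (fun i j => match i, j with 2%N, 1%N => 1 | 4%N, 3%N => 2 | _, _ => 0 end)
  | 7%N => mx5 (fun i j => match i, j with
           | 0%N, 0%N | 2%N, 2%N | 4%N, 4%N => -2 | 1%N, 1%N | 3%N, 3%N => 3 | _, _ => 0 end)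
  | _ => 0
  end.

Definition gf_ge_pairing (a b : nat) : C :=
  match a, b with
  | 0%N, 0%N | 1%N, 2%N | 3%N, 1%N | 4%N, 3%N => 10 | 2%N, 4%N | 6%N, 6%N => 30
  | 5%N, 5%N => 20 | 7%N, 7%N => 300 | _, _ => 0 end.

Definition ge_coord (A : 'M[C]_5) (k : nat) : C :=
  match k with
  | 0%N => A (inord 0) (inord 3) | 1%N => A (inord 0) (inord 4)
  | 2%N => A (inord 1) (inord 3) | 3%N => A (inord 1) (inord 4)
  | 4%N => A (inord 0) (inord 1) | 5%N => A (inord 0) (inord 2)
  | 6%N => A (inord 1) (inord 2) | 7%N => - (A (inord 0) (inord 0) / 2)
  | _ => 0 end.
Definition gf_coord (A : 'M[C]_5) (k : nat) : C :=
  match k with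
  | 0%N => A (inord 3) (inord 0) | 1%N => A (inord 3) (inord 1)
  | 2%N => A (inord 3) (inord 2) | 3%N => A (inord 4) (inord 0)
  | 4%N => A (inord 4) (inord 1) | 5%N => A (inord 4) (inord 2)
  | 6%N => A (inord 4) (inord 3) / 2 | 7%N => - (A (inord 0) (inord 0) / 2)
  | _ => 0 end.

Lemma e32_std : e32 C = e_std.
Proof.
rewrite /e32 /Xroot /ord5; apply/matrixP => i j; rewrite !mxE.
case: i j => [[|[|[|[|[|i]]]]] hi] [[|[|[|[|[|j]]]]] hj] //=;
  by rewrite -!(inj_eq val_inj) /= !inordK //= ?addr0 ?add0r.
Qed.

Lemma lie_e_f_std : lie e_std f_std = h_std.
Proof. by rewrite lie_mx5; apply: mx5_ext; case_entries; rewrite /mul5 /=; ring. Qed.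

Lemma lie_h_f_std : lie h_std f_std = - (2%:R *: f_std).
Proof.
by rewrite lie_mx5 scalemx5 oppmx5; apply: mx5_ext; case_entries; rewrite /mul5 /=; ring.
Qed.

Lemma ge_basis_centralizer (a : nat) : (a < 8)%N -> centralizer e_std (ge_basis a).
Proof.
rewrite /centralizer /in_sl5.
do 8 (case: a => [|a]; first by move=> _; rewrite mxtrace_mx5 lie_mx5 mx5_0; split;
  [ring | apply: mx5_ext; case_entries; rewrite /mul5 /=; ring]).
by [].
Qed.

Lemma killing_gf_ge (a b : nat) : (a < 8)%N -> (b < 8)%N ->
  killing (gf_basis a) (ge_basis b) = gf_ge_pairing a b.
Proof.
rewrite /killing.
do 8 (case: a => [|a]; [do 8 (case: b => [|b]; first by move=> _ _;
  rewrite mulmx5 mxtrace_mx5 /mul5 /=; ring); by [] | ]).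
by [].
Qed.

Lemma centralizer_e_std_span (Y : 'M[C]_5) :
  in_sl5 Y -> lie Y e_std = 0 -> Y = \sum_(k < 8) ge_coord Y k *: ge_basis k.
Proof.
elim/mx5_ind: Y => a00 a01 a02 a03 a04 a10 a11 a12 a13 a14 a20 a21 a22 a23 a24
  a30 a31 a32 a33 a34 a40 a41 a42 a43 a44.
rewrite (big_ord8_nat (fun k => ge_coord _ k *: ge_basis k)) /ge_coord !mx5E //.
rewrite /ge_basis !scalemx5 !addmx5 /in_sl5 mxtrace_mx5 /= => T.
rewrite /mx5_of /e_std lie_mx5 mx5_0 => /mx5_inj L; rewrite /mul5 /= in L.
case: L => [[L00 L01 L02 L03 L04] [L10 L11 L12 L13 L14] [L20 L21 L22 L23 L24]
  [_ _ _ _ L34] [_ _ _ _ _]].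
have E : a20 = 0 by apply: (eq_lincomb (c := -1) L00); field. subst a20.
have E : a21 = 0 by apply: (eq_lincomb (c := -1) L01); field. subst a21.
have E : a30 = 0 by apply: (eq_lincomb (c := -1) L10); field. subst a30.
have E : a31 = 0 by apply: (eq_lincomb (c := -1) L11); field. subst a31.
have E : a40 = 0 by apply: (eq_lincomb (c := -1) L20); field. subst a40.
have E : a41 = 0 by apply: (eq_lincomb (c := -1) L21); field. subst a41.
have E : a42 = 0 by apply: (eq_lincomb (c := -1) L22); field. subst a42.
have E : a43 = 0 by apply: (eq_lincomb (c := -1) L23); field. subst a43.
have E : a32 = 0 by apply: (eq_lincomb (c := 1) L34); field. subst a32.
have E : a10 = 0 by apply: (eq_lincomb (c := 1) L12); field. subst a10.
have E : a00 = a22 by apply: (eq_lincomb (c := 1) L02); field. subst a00.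
have E : a01 = a23 by apply: (eq_lincomb (c := 1) L03); field. subst a01.
have E : a02 = a24 by apply: (eq_lincomb (c := 1) L04); field. subst a02.
have E : a11 = a33 by apply: (eq_lincomb (c := 1) L13); field. subst a11.
have E : a12 = a34 by apply: (eq_lincomb (c := 1) L14); field. subst a12.
have E : a22 = a44 by apply: (eq_lincomb (c := 1) L24); field. subst a22.
have E : a33 = (-(3/2))*a44 by apply: (eq_lincomb (c := 1/2) T); field. subst a33.
by apply: mx5_ext; case_entries; rewrite /=; field.
Qed.

Lemma centralizer_f_std_span (Y : 'M[C]_5) :
  in_sl5 Y -> lie f_std Y = 0 -> Y = \sum_(k < 8) gf_coord Y k *: gf_basis k.
Proof.
elim/mx5_ind: Y => a00 a01 a02 a03 a04 a10 a11 a12 a13 a14 a20 a21 a22 a23 a24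
  a30 a31 a32 a33 a34 a40 a41 a42 a43 a44.
rewrite (big_ord8_nat (fun k => gf_coord _ k *: gf_basis k)) /gf_coord !mx5E //.
rewrite /gf_basis !scalemx5 !addmx5 /in_sl5 mxtrace_mx5 /= => T.
rewrite /mx5_of /f_std lie_mx5 mx5_0 => /mx5_inj L; rewrite /mul5 /= in L.
case: L => [[L00 L01 L02 _ _] [L10 L11 L12 _ _] [L20 L21 L22 _ _]
  [L30 L31 L32 _ _] [L40 L41 L42 L43 _]].
have E : a02 = 0 by apply: (eq_lincomb (c := -(1/2)) L00); field. subst a02.
have E : a03 = 0 by apply: (eq_lincomb (c := -1) L01); field. subst a03.
have E : a04 = 0 by apply: (eq_lincomb (c := -(1/2)) L02); field. subst a04.
have E : a12 = 0 by apply: (eq_lincomb (c := -(1/2)) L10); field. subst a12.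
have E : a13 = 0 by apply: (eq_lincomb (c := -1) L11); field. subst a13.
have E : a14 = 0 by apply: (eq_lincomb (c := -(1/2)) L12); field. subst a14.
have E : a24 = 0 by apply: (eq_lincomb (c := -(1/2)) L22); field. subst a24.
have E : a34 = 0 by apply: (eq_lincomb (c := -(1/2)) L32); field. subst a34.
have E : a23 = 0 by apply: (eq_lincomb (c := 1/2) L43); field. subst a23.
have E : a01 = 0 by apply: (eq_lincomb (c := 1/2) L21); field. subst a01.
have E : a00 = a22 by apply: (eq_lincomb (c := 1/2) L20); field. subst a00.
have E : a10 = 2*a32 by apply: (eq_lincomb (c := 1) L30); field. subst a10.
have E : a11 = a33 by apply: (eq_lincomb (c := 1) L31); field. subst a11.
have E : a20 = a42 by apply: (eq_lincomb (c := 1/2) L40); field. subst a20.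
have E : a21 = (1/2)*a43 by apply: (eq_lincomb (c := 1/2) L41); field. subst a21.
have E : a22 = a44 by apply: (eq_lincomb (c := 1/2) L42); field. subst a22.
have E : a33 = (-(3/2))*a44 by apply: (eq_lincomb (c := 1/2) T); field. subst a33.
by apply: mx5_ext; case_entries; rewrite /=; field.
Qed.

End StandardTriple.

Section Conormal.
Variable C : numClosedFieldType.
Local Notation e_std := (@e_std C).
Local Notation ge_basis := (@ge_basis C).

Definition ge_complement (Y : 'M[C]_5) : Prop :=
  in_sl5 Y /\ forall j : 'I_5, Y (inord 0) j = 0 /\ ((2 <= j)%N -> Y (inord 1) j = 0).

Lemma ge_basis_span_centralizer (c : 'I_8 -> C) :
  centralizer e_std (\sum_(k < 8) c k *: ge_basis k).
Proof.
have cB (k : 'I_8) := @ge_basis_centralizer C _ (ltn_ord k).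
split; first by apply: in_sl5_sum => k; apply/in_sl5Z/(cB k).1.
by rewrite lie_suml big1 // => k _; rewrite lieZl (cB k).2 scaler0.
Qed.

Lemma ge_complement_residual (A : 'M[C]_5) : in_sl5 A ->
  ge_complement (A - \sum_(k < 8) ge_coord A k *: ge_basis k).
Proof.
move=> trA; split.
  by apply: in_sl5D => //; apply/in_sl5N/(ge_basis_span_centralizer _).1.
elim/mx5_ind: A {trA} => a00 a01 a02 a03 a04 a10 a11 a12 a13 a14 a20 a21 a22 a23 a24
  a30 a31 a32 a33 a34 a40 a41 a42 a43 a44.
rewrite (big_ord8_nat (fun k => ge_coord _ k *: ge_basis k)) /ge_coord !mx5E //.
rewrite /ge_basis /mx5_of !scalemx5 !addmx5 submx5 => j.
rewrite -(inord_val j); case: j => -[|[|[|[|[|?]]]]] //= _; rewrite !mx5E //=.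
all: by split => [|]; [field | rewrite inordK //= => _; field].
Qed.

Lemma ge_complement_lie (A B : 'M[C]_5) :
  ge_complement A -> ge_complement B -> ge_complement (lie A B).
Proof.
move=> cA cB; split; first exact: in_sl5_lie.
have row0 (P Q : 'M[C]_5) j : ge_complement P -> (P *m Q) (inord 0) j = 0.
  by move=> [_ hP]; rewrite mxE big1 // => k _; rewrite (hP k).1 mul0r.
have row1 (P Q : 'M[C]_5) (j : 'I_5) :
    ge_complement P -> ge_complement Q -> (2 <= j)%N -> (P *m Q) (inord 1) j = 0.
  move=> [_ hP] [_ hQ] hj; rewrite mxE big1 // => k _.
  have [k2|k2] := ltnP k 2; last by rewrite ((hP k).2 k2) mul0r.
  have [->|->] : k = inord 0 \/ k = inord 1.
    by case: k k2 => -[|[|]] // ? _; [left | right]; apply/val_inj; rewrite /= inordK.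
  - by rewrite (hQ j).1 mulr0.
  - by rewrite ((hQ j).2 hj) mulr0.
have subE (P Q : 'M[C]_5) i j : (P - Q) i j = P i j - Q i j by rewrite !mxE.
move=> j; rewrite /lie !subE (row0 _ _ _ cA) (row0 _ _ _ cB) subrr.
by split => // hj; rewrite (row1 _ _ _ cA cB hj) (row1 _ _ _ cB cA hj) subrr.
Qed.

Lemma ge_coord_complement (Y : 'M[C]_5) (k : nat) : ge_complement Y -> ge_coord Y k = 0.
Proof.
move=> [_ h]; have r0 j : Y (inord 0) (inord j) = 0 by exact: (h _).1.
have r1 j : (2 <= j < 5)%N -> Y (inord 1) (inord j) = 0.
  by case/andP=> hj hj5; apply: (h _).2; rewrite inordK.
by case: k => [|[|[|[|[|[|[|[|k]]]]]]]]; rewrite /ge_coord ?r0 ?r1 ?mul0r ?oppr0.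
Qed.

Lemma conormal_e32 : conormal (e32 C).
Proof.
exists ge_complement; rewrite e32_std; split.
- split=> [|a x y [tx hx] [ty hy]]; first by split=> [|j]; [exact: in_sl50 | rewrite !mxE].
  split=> [|j]; first by apply: in_sl5D => //; apply: in_sl5Z.
  rewrite !mxE (hx j).1 (hy j).1 mulr0 addr0; split => // hj.
  by rewrite ((hx j).2 hj) ((hy j).2 hj) mulr0 addr0.
- by move=> Y [].
- split=> [Y tY | Y [tY lY] cY].
    exists (\sum_(k < 8) ge_coord Y k *: ge_basis k).
    exists (Y - \sum_(k < 8) ge_coord Y k *: ge_basis k); split.
    - exact: ge_basis_span_centralizer.
    - exact: ge_complement_residual.
    - by rewrite addrC subrK.
  rewrite (centralizer_e_std_span tY lY) big1 // => k _.
  by rewrite ge_coord_complement // scale0r.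
- exact: ge_complement_lie.
Qed.

End Conormal.

Section Conjugation.
Variables (C : numClosedFieldType) (g gi : 'M[C]_5).
Hypothesis ggi : g *m gi = 1%:M.
Implicit Types A B : 'M[C]_5.

Definition mxconj A := gi *m A *m g.

Lemma mxconjD A B : mxconj (A + B) = mxconj A + mxconj B.
Proof. by rewrite /mxconj mulmxDr mulmxDl. Qed.
Lemma mxconjZ (a : C) A : mxconj (a *: A) = a *: mxconj A.
Proof. by rewrite /mxconj -scalemxAr -scalemxAl. Qed.
Lemma mxconjN A : mxconj (- A) = - mxconj A.
Proof. by rewrite -scaleN1r mxconjZ scaleN1r. Qed.
Lemma mxconj0 : mxconj 0 = 0.
Proof. by rewrite /mxconj mulmx0 mul0mx. Qed.
Lemma mxconj_sum (m : nat) (c : 'I_m -> C) (B : 'I_m -> 'M[C]_5) :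
  mxconj (\sum_i c i *: B i) = \sum_i c i *: mxconj (B i).
Proof.
elim/big_ind2: _ => [|? ? ? ? <- <-|i _]; by rewrite ?mxconj0 ?mxconjD ?mxconjZ.
Qed.

Lemma mxconjM A B : mxconj A *m mxconj B = mxconj (A *m B).
Proof. by rewrite /mxconj !mulmxA -(mulmxA (gi *m A)) ggi mulmx1. Qed.
Lemma mxconj_lie A B : lie (mxconj A) (mxconj B) = mxconj (lie A B).
Proof. by rewrite /lie !mxconjM /mxconj mulmxBr mulmxBl. Qed.
Lemma mxtrace_conj A : \tr (mxconj A) = \tr A.
Proof. by rewrite /mxconj mxtrace_mulC mulmxA ggi mul1mx. Qed.
Lemma killing_conj A B : killing (mxconj A) (mxconj B) = killing A B.
Proof. by rewrite /killing mxconjM mxtrace_conj. Qed.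

End Conjugation.

Lemma mxconjK (C : numClosedFieldType) (g gi A : 'M[C]_5) :
  g *m gi = 1%:M -> mxconj gi g (mxconj g gi A) = A.
Proof. by move=> ggi; rewrite /mxconj !mulmxA ggi mul1mx -mulmxA ggi mulmx1. Qed.

Section TripleClassification.
Variable C : numClosedFieldType.
Local Notation e_std := (@e_std C).
Local Notation h_std := (@h_std C).
Local Notation f_std := (@f_std C).
Local Notation ge_basis := (@ge_basis C).

Definition h_form (p03 p04 p13 p14 p23 p24 p34 : C) : 'M[C]_5 :=
  mx5 (fun i j => match i, j with
  | 0%N, 0%N => 2 | 0%N, 1%N | 2%N, 3%N => p23 | 0%N, 2%N | 2%N, 4%N => p24
  | 0%N, 3%N => p03 | 0%N, 4%N => p04 | 1%N, 1%N => 1 | 1%N, 2%N | 3%N, 4%N => p34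
  | 1%N, 3%N => p13 | 1%N, 4%N => p14 | 3%N, 3%N => -1 | 4%N, 4%N => -2 | _, _ => 0 end).

(* A unipotent element commuting with [e_std] that conjugates [h_std] into
   [h_form p]; its entries solve these two linear conditions. *)
Definition h_conj (p03 p04 p13 p14 p23 p24 p34 : C) : 'M[C]_5 :=
  mx5 (fun i j => match i, j with
  | 0%N, 0%N => 1
  | 0%N, 1%N => - p23
  | 0%N, 2%N => - (1/2) * p24 + (1/2) * p23 * p34
  | 0%N, 3%N => (1/3) * p23 * p24 - (1/6) * p23 * p23 * p34 + (1/6) * p13 * p23 - (1/3) * p03
  | 0%N, 4%N => (1/8) * p24 * p24 - (1/6) * p23 * p24 * p34 + (1/24) * p23 * p23 * p34 * p34
      + (1/12) * p14 * p23 - (1/12) * p13 * p23 * p34 - (1/4) * p04 + (1/4) * p03 * p34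
  | 1%N, 1%N => 1
  | 1%N, 2%N => - p34
  | 1%N, 3%N => (1/2) * p23 * p34 - (1/2) * p13
  | 1%N, 4%N => (1/6) * p24 * p34 - (1/6) * p23 * p34 * p34 - (1/3) * p14 + (1/3) * p13 * p34
  | 2%N, 2%N => 1
  | 2%N, 3%N => - p23
  | 2%N, 4%N => - (1/2) * p24 + (1/2) * p23 * p34
  | 3%N, 3%N => 1
  | 3%N, 4%N => - p34
  | 4%N, 4%N => 1
  | _, _ => 0 end).

Definition h_conj_inv (p03 p04 p13 p14 p23 p24 p34 : C) : 'M[C]_5 :=
  mx5 (fun i j => match i, j with
  | 0%N, 0%N => 1
  | 0%N, 1%N => p23
  | 0%N, 2%N => (1/2) * p24 + (1/2) * p23 * p34
  | 0%N, 3%N => (1/6) * p23 * p24 + (1/6) * p23 * p23 * p34 + (1/3) * p13 * p23 + (1/3) * p03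
  | 0%N, 4%N => (1/8) * p24 * p24 + (1/6) * p23 * p24 * p34 + (1/24) * p23 * p23 * p34 * p34
      + (1/4) * p14 * p23 + (1/12) * p13 * p23 * p34 + (1/4) * p04 + (1/12) * p03 * p34
  | 1%N, 1%N => 1
  | 1%N, 2%N => p34
  | 1%N, 3%N => (1/2) * p23 * p34 + (1/2) * p13
  | 1%N, 4%N => (1/3) * p24 * p34 + (1/6) * p23 * p34 * p34 + (1/3) * p14 + (1/6) * p13 * p34
  | 2%N, 2%N => 1
  | 2%N, 3%N => p23
  | 2%N, 4%N => (1/2) * p24 + (1/2) * p23 * p34
  | 3%N, 3%N => 1
  | 3%N, 4%N => p34
  | 4%N, 4%N => 1
  | _, _ => 0 end).

Section NeutralConjugation.
Variables p03 p04 p13 p14 p23 p24 p34 : C.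
Local Notation g := (h_conj p03 p04 p13 p14 p23 p24 p34).

Lemma h_conjK : g *m h_conj_inv p03 p04 p13 p14 p23 p24 p34 = 1%:M.
Proof. by rewrite mulmx5 mx5_1; apply: mx5_ext; case_entries; rewrite /mul5 /=; field. Qed.

Lemma h_conj_e_std : g *m e_std = e_std *m g.
Proof. by rewrite !mulmx5; apply: mx5_ext; case_entries; rewrite /mul5 /=; field. Qed.

Lemma h_conj_h_std : g *m h_std = h_form p03 p04 p13 p14 p23 p24 p34 *m g.
Proof. by rewrite !mulmx5; apply: mx5_ext; case_entries; rewrite /mul5 /=; field. Qed.

End NeutralConjugation.

Lemma neutral_std_form (h : 'M[C]_5) :
  lie h e_std = 2%:R *: e_std -> in_sl5 h -> killing h (ge_basis 7) = 0 ->
  exists p03 p04 p13 p14 p23 p24 p34, h = h_form p03 p04 p13 p14 p23 p24 p34.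
Proof.
elim/mx5_ind: h => a00 a01 a02 a03 a04 a10 a11 a12 a13 a14 a20 a21 a22 a23 a24
  a30 a31 a32 a33 a34 a40 a41 a42 a43 a44.
rewrite /mx5_of /e_std lie_mx5 scalemx5 => /mx5_inj L; rewrite /mul5 /= in L.
rewrite /in_sl5 mxtrace_mx5 /= => T.
rewrite /killing /ge_basis mulmx5 mxtrace_mx5 /mul5 /= => K7.
exists a03, a04, a13, a14, a23, a24, a34.
case: L => [[L00 L01 L02 L03 L04] [L10 L11 L12 L13 L14] [L20 L21 L22 L23 L24]
  [_ _ _ _ L34] [_ _ _ _ _]].
have E : a20 = 0 by apply: (eq_lincomb (c := -1) L00); field. subst a20.
have E : a21 = 0 by apply: (eq_lincomb (c := -1) L01); field. subst a21.
have E : a30 = 0 by apply: (eq_lincomb (c := -1) L10); field. subst a30.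
have E : a31 = 0 by apply: (eq_lincomb (c := -1) L11); field. subst a31.
have E : a40 = 0 by apply: (eq_lincomb (c := -1) L20); field. subst a40.
have E : a41 = 0 by apply: (eq_lincomb (c := -1) L21); field. subst a41.
have E : a42 = 0 by apply: (eq_lincomb (c := -1) L22); field. subst a42.
have E : a43 = 0 by apply: (eq_lincomb (c := -1) L23); field. subst a43.
have E : a32 = 0 by apply: (eq_lincomb (c := 1) L34); field. subst a32.
have E : a10 = 0 by apply: (eq_lincomb (c := 1) L12); field. subst a10.
have E : a01 = a23 by apply: (eq_lincomb (c := 1) L03); field. subst a01.
have E : a02 = a24 by apply: (eq_lincomb (c := 1) L04); field. subst a02.
have E : a12 = a34 by apply: (eq_lincomb (c := 1) L14); field. subst a12.
have E : a00 = 2 + a22 by apply: (eq_lincomb (c := 1) L02); field. subst a00.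
have E : a11 = 2 + a33 by apply: (eq_lincomb (c := 1) L13); field. subst a11.
have E : a22 = 2 + a44 by apply: (eq_lincomb (c := 1) L24); field. subst a22.
have E : a33 = -4 - 3/2 * a44 by apply: (eq_lincomb (c := 1/2) T); field. subst a33.
have E : a44 = -2 by apply: (eq_lincomb (c := -(1/150)) K7); field. subst a44.
by rewrite /h_form; apply: mx5_ext; case_entries; rewrite /=; field.
Qed.

(* Killed by [ad e] and of [ad h]-weight -2: impossible in a finite-dimensional
   sl2-module unless zero. *)
Lemma ad_e_std_inj_neg2 (k : 'M[C]_5) :
  lie h_std k = - (2%:R *: k) -> lie e_std k = 0 -> k = 0.
Proof.
elim/mx5_ind: k => a00 a01 a02 a03 a04 a10 a11 a12 a13 a14 a20 a21 a22 a23 a24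
  a30 a31 a32 a33 a34 a40 a41 a42 a43 a44.
rewrite /mx5_of /e_std /h_std !lie_mx5 scalemx5 oppmx5 mx5_0.
move=> /mx5_inj M /mx5_inj N; rewrite /mul5 /= in M N.
case: M => [[M00 M01 M02 M03 M04] [M10 M11 M12 M13 M14] [_ M21 M22 M23 M24]
  [M30 _ M32 M33 M34] [M40 M41 _ M43 M44]].
case: N => [[N00 _ _ _ _] [_ N11 _ _ _] [_ _ N22 _ _] [_ _ _ _ _] [_ _ _ _ _]].
have E : a00 = 0 by apply: (eq_lincomb (c := 1/2) M00); field. subst a00.
have E : a01 = 0 by apply: (eq_lincomb (c := 1/3) M01); field. subst a01.
have E : a02 = 0 by apply: (eq_lincomb (c := 1/4) M02); field. subst a02.
have E : a03 = 0 by apply: (eq_lincomb (c := 1/5) M03); field. subst a03.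
have E : a04 = 0 by apply: (eq_lincomb (c := 1/6) M04); field. subst a04.
have E : a10 = 0 by apply: (eq_lincomb (c := 1) M10); field. subst a10.
have E : a11 = 0 by apply: (eq_lincomb (c := 1/2) M11); field. subst a11.
have E : a12 = 0 by apply: (eq_lincomb (c := 1/3) M12); field. subst a12.
have E : a13 = 0 by apply: (eq_lincomb (c := 1/4) M13); field. subst a13.
have E : a14 = 0 by apply: (eq_lincomb (c := 1/5) M14); field. subst a14.
have E : a21 = 0 by apply: (eq_lincomb (c := 1) M21); field. subst a21.
have E : a22 = 0 by apply: (eq_lincomb (c := 1/2) M22); field. subst a22.
have E : a23 = 0 by apply: (eq_lincomb (c := 1/3) M23); field. subst a23.
have E : a24 = 0 by apply: (eq_lincomb (c := 1/4) M24); field. subst a24.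
have E : a30 = 0 by apply: (eq_lincomb (c := -1) M30); field. subst a30.
have E : a32 = 0 by apply: (eq_lincomb (c := 1) M32); field. subst a32.
have E : a33 = 0 by apply: (eq_lincomb (c := 1/2) M33); field. subst a33.
have E : a34 = 0 by apply: (eq_lincomb (c := 1/3) M34); field. subst a34.
have E : a40 = 0 by apply: (eq_lincomb (c := -(1/2)) M40); field. subst a40.
have E : a41 = 0 by apply: (eq_lincomb (c := -1) M41); field. subst a41.
have E : a43 = 0 by apply: (eq_lincomb (c := 1) M43); field. subst a43.
have E : a44 = 0 by apply: (eq_lincomb (c := 1/2) M44); field. subst a44.
have E : a20 = 0 by apply: (eq_lincomb (c := 1) N00); field. subst a20.
have E : a31 = 0 by apply: (eq_lincomb (c := 1) N11); field. subst a31.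
have E : a42 = 0 by apply: (eq_lincomb (c := 1) N22); field. subst a42.
by apply: mx5_ext; case_entries; rewrite /=; field.
Qed.

Lemma sl2_triple_std (h f : 'M[C]_5) : is_sl2_triple h e_std f ->
  exists g gi : 'M[C]_5,
    [/\ g *m gi = 1%:M, gi *m g = 1%:M, mxconj g gi e_std = e_std & mxconj g gi f = f_std].
Proof.
case=> th _ _ [he hf ef].
have hK : killing h (ge_basis 7) = 0.
  have [_ lie7] := @ge_basis_centralizer C 7 isT.
  by rewrite -ef killingC killing_lie lie7 killing0l.
have [p03 [p04 [p13 [p14 [p23 [p24 [p34 hE]]]]]]] := neutral_std_form he th hK.
set g := h_conj p03 p04 p13 p14 p23 p24 p34.
set gi := h_conj_inv p03 p04 p13 p14 p23 p24 p34.
have ggi : g *m gi = 1%:M by apply: h_conjK.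
have gig : gi *m g = 1%:M by rewrite mulmx1C.
have conj_e : mxconj g gi e_std = e_std.
  by rewrite /mxconj -mulmxA -h_conj_e_std mulmxA gig mul1mx.
have conj_h : mxconj g gi h = h_std.
  by rewrite /mxconj -mulmxA hE -h_conj_h_std mulmxA gig mul1mx.
exists g, gi; split => //.
apply/eqP; rewrite -subr_eq0; apply/eqP/ad_e_std_inj_neg2.
  rewrite lieBr lie_h_f_std -{1}conj_h mxconj_lie // hf mxconjN mxconjZ.
  by rewrite scalerBr opprB opprK addrC.
by rewrite lieBr lie_e_f_std -{1}conj_e mxconj_lie // ef conj_h subrr.
Qed.

End TripleClassification.

Section TransverseConjugation.
Variables (C : numClosedFieldType) (g gi : 'M[C]_5).
Hypotheses (ggi : g *m gi = 1%:M) (gig : gi *m g = 1%:M).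
Local Notation cj := (mxconj g gi).

Lemma centralizer_conj (e Y : 'M[C]_5) : centralizer e Y -> centralizer (cj e) (cj Y).
Proof.
by case=> t l; split; [rewrite /in_sl5 mxtrace_conj | rewrite mxconj_lie // l mxconj0].
Qed.

Lemma image_ad_conj (f Y : 'M[C]_5) : image_ad f Y -> image_ad (cj f) (cj Y).
Proof.
by case=> W [t ->]; exists (cj W); split; [rewrite /in_sl5 mxtrace_conj | rewrite mxconj_lie].
Qed.

Lemma is_basis_of_conj (S S' : 'M[C]_5 -> Prop) (m : nat) (B : 'I_m -> 'M[C]_5) :
  (forall Y, S Y -> S' (cj Y)) -> (forall Y, S' Y -> S (mxconj gi g Y)) ->
  is_basis_of S B -> is_basis_of S' (fun i => cj (B i)).
Proof.
move=> SS' S'S [inS free span]; split=> [i|c|Y /S'S /span [c hc]]; first exact: SS'.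
  by move=> hc; apply: free; rewrite -(mxconjK (\sum_i c i *: B i) ggi) mxconj_sum hc mxconj0.
by exists c; rewrite -mxconj_sum -hc (mxconjK _ gig).
Qed.

Variables (k p : nat) (e : 'M[C]_5) (Z : 'I_k -> 'M[C]_5) (X : 'I_p -> 'M[C]_5)
  (Zbar : 'I_k -> 'M[C]_5).

Lemma is_dual_Zpart_conj :
  is_dual_Zpart Z X Zbar ->
  is_dual_Zpart (fun j => cj (Z j)) (fun l => cj (X l)) (fun s => cj (Zbar s)).
Proof.
case=> tr dZ dX; split=> [s|s j|s l].
- by rewrite /in_sl5 mxtrace_conj //; apply: tr.
- by rewrite killing_conj //; apply: dZ.
- by rewrite killing_conj //; apply: dX.
Qed.

Lemma qpoint_conj q : qpoint (fun s => cj (Zbar s)) q = cj (qpoint Zbar q).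
Proof. by rewrite /qpoint mxconj_sum. Qed.

Lemma C_N_conj q : C_N (cj e) (fun l => cj (X l)) (fun s => cj (Zbar s)) q = C_N e X Zbar q.
Proof. by apply/matrixP => l m; rewrite !mxE qpoint_conj -mxconjD mxconj_lie // killing_conj. Qed.

Lemma Lambda_N_conj q :
  Lambda_N (cj e) (fun j => cj (Z j)) (fun l => cj (X l)) (fun s => cj (Zbar s)) q =
  Lambda_N e Z X Zbar q.
Proof.
have AN : A_N (fun j => cj (Z j)) (fun s => cj (Zbar s)) q = A_N Z Zbar q.
  by apply/matrixP => i j; rewrite !mxE qpoint_conj mxconj_lie // killing_conj.
have DN : D_N (fun j => cj (Z j)) (fun l => cj (X l)) (fun s => cj (Zbar s)) q = D_N Z X Zbar q.
  by apply/matrixP => l j; rewrite !mxE qpoint_conj mxconj_lie // killing_conj.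
by rewrite /Lambda_N C_N_conj AN DN.
Qed.

End TransverseConjugation.

Section SliceComputations.
Variable C : numClosedFieldType.
Local Notation e_std := (@e_std C).
Local Notation f_std := (@f_std C).
Local Notation ge_basis := (@ge_basis C).
Local Notation gf_basis := (@gf_basis C).

Definition slice_pt (y : nat -> C) : 'M[C]_5 :=
  mx5 (fun i j => match i, j with
  | 0%N, 2%N | 1%N, 3%N | 2%N, 4%N => 1
  | 0%N, 0%N | 2%N, 2%N | 4%N, 4%N => -2 * y 7 | 1%N, 1%N | 3%N, 3%N => 3 * y 7
  | 1%N, 0%N => 2 * y 2 | 2%N, 0%N | 4%N, 2%N => y 5 | 2%N, 1%N => y 6 | 4%N, 3%N => 2 * y 6
  | 3%N, 0%N => y 0 | 3%N, 1%N => y 1 | 3%N, 2%N => y 2 | 4%N, 0%N => y 3 | 4%N, 1%N => y 4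
  | _, _ => 0 end).

Lemma slice_ptE (y : nat -> C) : e_std + \sum_(k < 8) y k *: gf_basis k = slice_pt y.
Proof.
rewrite (big_ord8_nat (fun k => y k *: gf_basis k)) /gf_basis /e_std !scalemx5 !addmx5.
by apply: mx5_ext; case_entries; rewrite /=; ring.
Qed.

(* The general element of [Im ad f_std], a 16-dimensional space. *)
Definition image_f_std (l10 l20 l21 l30 l31 l32 l40 l41 l42 l43 ua ub uc d0 d1 d2 : C) :=
  mx5 (fun i j => match i, j with
  | 0%N, 0%N => d0 | 0%N, 1%N => ua | 0%N, 2%N => ub
  | 1%N, 0%N => l10 | 1%N, 1%N => d1 | 1%N, 2%N => -2 * uc
  | 2%N, 0%N => l20 | 2%N, 1%N => l21 | 2%N, 2%N => d2 | 2%N, 3%N => -2 * ua | 2%N, 4%N => - ub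
  | 3%N, 0%N => l30 | 3%N, 1%N => l31 | 3%N, 2%N => l32 | 3%N, 3%N => - d1 | 3%N, 4%N => uc
  | 4%N, 0%N => l40 | 4%N, 1%N => l41 | 4%N, 2%N => l42 | 4%N, 3%N => l43
  | 4%N, 4%N => - d2 - d0
  | _, _ => 0 end).

Lemma image_f_std_ind (P : 'M[C]_5 -> Prop) :
  (forall l10 l20 l21 l30 l31 l32 l40 l41 l42 l43 ua ub uc d0 d1 d2 : C,
     P (image_f_std l10 l20 l21 l30 l31 l32 l40 l41 l42 l43 ua ub uc d0 d1 d2)) ->
  forall W, P (lie f_std W).
Proof.
move=> hP W; set U := lie f_std W.
suff -> : U = image_f_std (U (inord 1) (inord 0)) (U (inord 2) (inord 0)) (U (inord 2) (inord 1))
  (U (inord 3) (inord 0)) (U (inord 3) (inord 1)) (U (inord 3) (inord 2)) (U (inord 4) (inord 0))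
  (U (inord 4) (inord 1)) (U (inord 4) (inord 2)) (U (inord 4) (inord 3)) (U (inord 0) (inord 1))
  (U (inord 0) (inord 2)) (U (inord 3) (inord 4)) (U (inord 0) (inord 0)) (U (inord 1) (inord 1))
  (U (inord 2) (inord 2)) by apply: hP.
rewrite {}/U; elim/mx5_ind: W => a00 a01 a02 a03 a04 a10 a11 a12 a13 a14 a20 a21 a22 a23 a24
  a30 a31 a32 a33 a34 a40 a41 a42 a43 a44.
rewrite /f_std /mx5_of lie_mx5 !mx5E // /image_f_std.
by apply: mx5_ext; case_entries; rewrite /mul5 /=; ring.
Qed.

Lemma slice_image_nondeg (y : nat -> C)
    (l10 l20 l21 l30 l31 l32 l40 l41 l42 l43 ua ub uc d0 d1 d2 : C) :
  let U := image_f_std l10 l20 l21 l30 l31 l32 l40 l41 l42 l43 ua ub uc d0 d1 d2 in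
  lie (lie (slice_pt y) U) f_std = 0 -> U = 0.
Proof.
rewrite /slice_pt /image_f_std /f_std !lie_mx5 mx5_0 => /mx5_inj H; rewrite /mul5 /= in H.
case: H => [[H00 H01 H02 _ _] [H10 H11 H12 _ _] [H20 H21 H22 _ _]
  [H30 H31 H32 _ _] [H40 H41 H42 H43 _]].
have E : ua = 0 by apply: (eq0_lincomb1 (c1 := -(1/3)) H01); field. subst ua.
have E : ub = 0 by apply: (eq0_lincomb1 (c1 := -(1/4)) H02); field. subst ub.
have E : l21 = 0 by apply: (eq0_lincomb2 (c1 := -(1/2)) (c2 := -(1/4)) H21 H43); field. subst l21.
have E : l43 = 0 by apply: (eq0_lincomb1 (c1 := 1) H21); field. subst l43.
have E : uc = 0 by apply: (eq0_lincomb1 (c1 := 1/6) H12); field. subst uc.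
have E : l10 = 0 by apply: (eq0_lincomb2 (c1 := -(3/4)) (c2 := -(1/2)) H10 H32); field. subst l10.
have E : l20 = 0 by apply: (eq0_lincomb2 (c1 := -(1/3)) (c2 := -(1/6)) H20 H42); field. subst l20.
have E : l31 = 0 by apply: (eq0_lincomb1 (c1 := -(1/2)) H31); field. subst l31.
have E : l32 = 0 by apply: (eq0_lincomb1 (c1 := 1/2) H10); field. subst l32.
have E : l42 = 0 by apply: (eq0_lincomb1 (c1 := 1/2) H20); field. subst l42.
have E : d0 = 0 by apply: (eq0_lincomb2 (c1 := -(1/2)) (c2 := -(1/6)) H00 H22); field. subst d0.
have E : d1 = 0 by apply: (eq0_lincomb1 (c1 := -(1/2)) H11); field. subst d1.
have E : d2 = 0 by apply: (eq0_lincomb1 (c1 := 1/2) H00); field. subst d2.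
have E : l30 = 0 by apply: (eq0_lincomb1 (c1 := -(1/3)) H30); field. subst l30.
have E : l40 = 0 by apply: (eq0_lincomb1 (c1 := -(1/4)) H40); field. subst l40.
have E : l41 = 0 by apply: (eq0_lincomb1 (c1 := -(1/3)) H41); field. subst l41.
by apply: mx5_ext; case_entries; rewrite /=; ring.
Qed.

Lemma slice_nondeg (y : nat -> C) (U : 'M[C]_5) :
  image_ad f_std U -> lie (lie (slice_pt y) U) f_std = 0 -> U = 0.
Proof.
case=> W [_ ->]; move: W.
by apply: (image_f_std_ind (P := fun U => lie (lie (slice_pt y) U) f_std = 0 -> U = 0));
  exact: slice_image_nondeg.
Qed.

(* [ge_correction a y] solves the linear condition that
   [lie (slice_pt y) (ge_basis a + lie f_std (ge_correction a y))], computed in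
   [slice_bracket], commutes with [f_std]. *)
Definition ge_correction (a : nat) (y : nat -> C) : 'M[C]_5 :=
  match a with
  | 0%N => mx5 (fun i j => match i, j with
    | 0%N, 0%N => - (5/3) * y 2 * y 7 + (1/2) * y 0
    | 0%N, 1%N => - (25/12) * y 7 * y 7 - (1/4) * y 5 + (3/4) * y 1
    | 0%N, 2%N => (1/3) * y 2
    | 0%N, 3%N => (5/3) * y 7
    | 1%N, 0%N => 2 * y 2 * y 2
    | 1%N, 1%N => (5/2) * y 2 * y 7 - (1/12) * y 0
    | 1%N, 3%N => - y 2
    | 2%N, 0%N => - (25/4) * y 2 * y 7 * y 7 + (1/2) * y 2 * y 5 + (1/4) * y 1 * y 2
        + (5/6) * y 0 * y 7
    | 2%N, 1%N => - (125/6) * y 7 * y 7 * y 7 + (35/18) * y 5 * y 7 + (1/6) * y 3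
        - (2/3) * y 2 * y 6 + (35/18) * y 1 * y 7
    | 2%N, 2%N => (1/6) * y 0
    | 2%N, 3%N => (25/6) * y 7 * y 7 - (1/2) * y 5 + (1/2) * y 1
    | 2%N, 4%N => (1/6) * y 2
    | 3%N, 3%N => - (5/6) * y 2 * y 7 - (7/12) * y 0
    | _, _ => 0 end)
  | 1%N => mx5 (fun i j => match i, j with
    | 0%N, 0%N => y 3 - (4/3) * y 2 * y 6
    | 0%N, 1%N => - (5/6) * y 6 * y 7 + (3/4) * y 4
    | 0%N, 2%N => (1/6) * y 5
    | 0%N, 3%N => (2/3) * y 6
    | 1%N, 0%N => - (50/3) * y 2 * y 7 * y 7 + (14/9) * y 2 * y 5 + (8/9) * y 1 * y 2
        + (5/3) * y 0 * y 7
    | 1%N, 1%N => - (3/4) * y 3 + (7/3) * y 2 * y 6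
    | 1%N, 2%N => - (5/3) * y 2 * y 7 - (1/2) * y 0
    | 1%N, 4%N => - (2/3) * y 2
    | 2%N, 0%N => (1/2) * y 5 * y 5 - 5 * y 2 * y 6 * y 7 + (7/12) * y 2 * y 4 + (7/12) * y 0 * y 6
    | 2%N, 1%N => - (25/3) * y 6 * y 7 * y 7 + (7/9) * y 5 * y 6 + (5/6) * y 4 * y 7
        + (4/9) * y 1 * y 6
    | 2%N, 2%N => (1/2) * y 3 - (2/3) * y 2 * y 6
    | 2%N, 3%N => (5/3) * y 6 * y 7 + (1/2) * y 4
    | 2%N, 4%N => - (1/6) * y 5
    | 3%N, 3%N => - (3/4) * y 3 - (1/3) * y 2 * y 6
    | 3%N, 4%N => (5/6) * y 2 * y 7 - (3/4) * y 0
    | _, _ => 0 end)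
  | 2%N => mx5 (fun i j => match i, j with
    | 0%N, 1%N => - (1/4) * y 6
    | 1%N, 0%N => (5/3) * y 2 * y 7 + (1/3) * y 0
    | 1%N, 1%N => (1/2) * y 1
    | 1%N, 2%N => (1/2) * y 2
    | 2%N, 0%N => (1/2) * y 2 * y 6
    | 2%N, 1%N => (5/6) * y 6 * y 7 + (1/6) * y 4
    | 2%N, 3%N => - (1/2) * y 6
    | 3%N, 3%N => - (1/2) * y 1
    | 3%N, 4%N => (1/4) * y 2
    | _, _ => 0 end)
  | 3%N => mx5 (fun i j => match i, j with
    | 0%N, 0%N => - (5/3) * y 6 * y 7 + (1/2) * y 4
    | 0%N, 2%N => - (1/6) * y 6
    | 1%N, 0%N => - (125/3) * y 7 * y 7 * y 7 + (35/9) * y 5 * y 7 + (1/3) * y 3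
        - (4/3) * y 2 * y 6 + (35/9) * y 1 * y 7
    | 1%N, 1%N => (10/3) * y 6 * y 7 - (1/6) * y 4
    | 1%N, 2%N => - (25/6) * y 7 * y 7 + (1/2) * y 5 - (1/2) * y 1
    | 1%N, 3%N => y 6
    | 1%N, 4%N => - (5/3) * y 7
    | 2%N, 0%N => - (25/4) * y 6 * y 7 * y 7 + (1/2) * y 5 * y 6 + (5/6) * y 4 * y 7
        + (1/4) * y 1 * y 6
    | 2%N, 1%N => y 6 * y 6
    | 2%N, 2%N => - (5/3) * y 6 * y 7 + (1/3) * y 4
    | 2%N, 4%N => - (1/3) * y 6
    | 3%N, 3%N => - (2/3) * y 4
    | 3%N, 4%N => (25/12) * y 7 * y 7 + (1/4) * y 5 - (3/4) * y 1
    | _, _ => 0 end)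
  | 4%N => mx5 (fun i j => match i, j with
    | 0%N, 0%N => y 2
    | 0%N, 1%N => 5 * y 7
    | 1%N, 1%N => - y 2
    | 2%N, 0%N => (1/4) * y 0
    | 2%N, 1%N => - (1/6) * y 5 + (1/3) * y 1
    | 2%N, 2%N => (1/2) * y 2
    | 2%N, 3%N => 5 * y 7
    | 3%N, 3%N => - (1/2) * y 2
    | _, _ => 0 end)
  | 5%N => mx5 (fun i j => match i, j with
    | 0%N, 0%N => y 5
    | 0%N, 1%N => (5/4) * y 6
    | 1%N, 0%N => - (5/3) * y 2 * y 7 + (2/3) * y 0
    | 1%N, 1%N => - (3/4) * y 5
    | 1%N, 2%N => - (3/2) * y 2
    | 2%N, 0%N => (1/2) * y 3 - (1/2) * y 2 * y 6
    | 2%N, 1%N => - (5/6) * y 6 * y 7 + (1/3) * y 4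
    | 2%N, 2%N => (1/2) * y 5
    | 2%N, 3%N => (3/2) * y 6
    | 3%N, 3%N => - (3/4) * y 5
    | 3%N, 4%N => - (5/4) * y 2
    | _, _ => 0 end)
  | 6%N => mx5 (fun i j => match i, j with
    | 0%N, 0%N => y 6
    | 1%N, 0%N => - (1/3) * y 5 + (2/3) * y 1
    | 1%N, 1%N => - y 6
    | 1%N, 2%N => - 5 * y 7
    | 2%N, 0%N => (1/4) * y 4
    | 2%N, 2%N => (1/2) * y 6
    | 3%N, 3%N => - (1/2) * y 6
    | 3%N, 4%N => - 5 * y 7
    | _, _ => 0 end)
  | 7%N => mx5 (fun _ _ => 0)
  | _ => 0
  end.

Definition slice_bracket (a : nat) (y : nat -> C) : 'M[C]_5 :=
  match a with
  | 0%N => mx5 (fun i j => match i, j with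
    | 0%N, 0%N => - (1/3) * y 0
    | 1%N, 0%N => - (4/3) * y 2 * y 2
    | 1%N, 1%N => (1/2) * y 0
    | 2%N, 0%N => (25/6) * y 2 * y 7 * y 7 - (3/2) * y 1 * y 2 - (5/3) * y 0 * y 7
    | 2%N, 1%N => (20/9) * y 5 * y 7 + (1/3) * y 3 - (2/3) * y 2 * y 6 - (40/9) * y 1 * y 7
    | 2%N, 2%N => - (1/3) * y 0
    | 3%N, 1%N => - (25/3) * y 2 * y 7 * y 7 + 3 * y 1 * y 2 - (5/3) * y 0 * y 7
    | 3%N, 2%N => - (2/3) * y 2 * y 2
    | 3%N, 3%N => (1/2) * y 0
    | 4%N, 0%N => (250/3) * y 2 * y 7 * y 7 * y 7 - (100/9) * y 2 * y 5 * y 7 - (5/3) * y 2 * y 3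
        + (20/3) * y 2 * y 2 * y 6 - (70/9) * y 1 * y 2 * y 7 - (25/3) * y 0 * y 7 * y 7
        + (4/3) * y 0 * y 5 - y 0 * y 1
    | 4%N, 1%N => (625/3) * y 7 * y 7 * y 7 * y 7 - (250/9) * y 5 * y 7 * y 7 - (10/3) * y 3 * y 7
        + (40/3) * y 2 * y 6 * y 7 + (2/3) * y 2 * y 4 - (250/9) * y 1 * y 7 * y 7 + 2 * y 1 * y 5
        - y 1 * y 1 + (2/3) * y 0 * y 6
    | 4%N, 2%N => (25/6) * y 2 * y 7 * y 7 - (3/2) * y 1 * y 2 - (5/3) * y 0 * y 7
    | 4%N, 3%N => (40/9) * y 5 * y 7 + (2/3) * y 3 - (4/3) * y 2 * y 6 - (80/9) * y 1 * y 7
    | 4%N, 4%N => - (1/3) * y 0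
    | _, _ => 0 end)
  | 1%N => mx5 (fun i j => match i, j with
    | 1%N, 0%N => - (4/9) * y 2 * y 5 + (8/9) * y 1 * y 2 + (20/3) * y 0 * y 7
    | 2%N, 0%N => - (5/6) * y 2 * y 4 + (5/6) * y 0 * y 6
    | 2%N, 1%N => (2/9) * y 5 * y 6 - (10/3) * y 4 * y 7 - (4/9) * y 1 * y 6
    | 3%N, 0%N => - (250/3) * y 2 * y 7 * y 7 * y 7 + (100/9) * y 2 * y 5 * y 7 + (5/3) * y 2 * y 3
        - (20/3) * y 2 * y 2 * y 6 + (70/9) * y 1 * y 2 * y 7 + (25/3) * y 0 * y 7 * y 7
        - (4/3) * y 0 * y 5 + y 0 * y 1
    | 3%N, 1%N => (5/3) * y 2 * y 4 - (5/3) * y 0 * y 6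
    | 3%N, 2%N => - (2/9) * y 2 * y 5 + (4/9) * y 1 * y 2 + (10/3) * y 0 * y 7
    | 4%N, 1%N => (250/3) * y 6 * y 7 * y 7 * y 7 - (100/9) * y 5 * y 6 * y 7
        - (25/3) * y 4 * y 7 * y 7 + (4/3) * y 4 * y 5 - (5/3) * y 3 * y 6
        + (20/3) * y 2 * y 6 * y 6 - (70/9) * y 1 * y 6 * y 7 - y 1 * y 4
    | 4%N, 2%N => - (5/6) * y 2 * y 4 + (5/6) * y 0 * y 6
    | 4%N, 3%N => (4/9) * y 5 * y 6 - (20/3) * y 4 * y 7 - (8/9) * y 1 * y 6
    | _, _ => 0 end)
  | 2%N => mx5 (fun i j => match i, j with
    | 1%N, 0%N => - (10/3) * y 2 * y 7 - (2/3) * y 0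
    | 2%N, 1%N => (5/3) * y 6 * y 7 + (1/3) * y 4
    | 3%N, 0%N => (25/3) * y 2 * y 7 * y 7 - 3 * y 1 * y 2 + (5/3) * y 0 * y 7
    | 3%N, 2%N => - (5/3) * y 2 * y 7 - (1/3) * y 0
    | 4%N, 0%N => - (5/3) * y 2 * y 4 + (5/3) * y 0 * y 6
    | 4%N, 1%N => - (25/3) * y 6 * y 7 * y 7 - (5/3) * y 4 * y 7 + 3 * y 1 * y 6
    | 4%N, 3%N => (10/3) * y 6 * y 7 + (2/3) * y 4
    | _, _ => 0 end)
  | 3%N => mx5 (fun i j => match i, j with
    | 0%N, 0%N => (1/3) * y 4
    | 1%N, 0%N => - (40/9) * y 5 * y 7 - (2/3) * y 3 + (4/3) * y 2 * y 6 + (80/9) * y 1 * y 7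
    | 1%N, 1%N => - (1/2) * y 4
    | 2%N, 0%N => - (25/6) * y 6 * y 7 * y 7 + (5/3) * y 4 * y 7 + (3/2) * y 1 * y 6
    | 2%N, 1%N => (2/3) * y 6 * y 6
    | 2%N, 2%N => (1/3) * y 4
    | 3%N, 0%N => - (625/3) * y 7 * y 7 * y 7 * y 7 + (250/9) * y 5 * y 7 * y 7
        + (10/3) * y 3 * y 7 - (40/3) * y 2 * y 6 * y 7 - (2/3) * y 2 * y 4
        + (250/9) * y 1 * y 7 * y 7 - 2 * y 1 * y 5 + y 1 * y 1 - (2/3) * y 0 * y 6
    | 3%N, 1%N => (25/3) * y 6 * y 7 * y 7 + (5/3) * y 4 * y 7 - 3 * y 1 * y 6
    | 3%N, 2%N => - (20/9) * y 5 * y 7 - (1/3) * y 3 + (2/3) * y 2 * y 6 + (40/9) * y 1 * y 7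
    | 3%N, 3%N => - (1/2) * y 4
    | 4%N, 0%N => - (250/3) * y 6 * y 7 * y 7 * y 7 + (100/9) * y 5 * y 6 * y 7
        + (25/3) * y 4 * y 7 * y 7 - (4/3) * y 4 * y 5 + (5/3) * y 3 * y 6
        - (20/3) * y 2 * y 6 * y 6 + (70/9) * y 1 * y 6 * y 7 + y 1 * y 4
    | 4%N, 2%N => - (25/6) * y 6 * y 7 * y 7 + (5/3) * y 4 * y 7 + (3/2) * y 1 * y 6
    | 4%N, 3%N => (4/3) * y 6 * y 6
    | 4%N, 4%N => (1/3) * y 4
    | _, _ => 0 end)
  | 4%N => mx5 (fun i j => match i, j with
    | 0%N, 0%N => - y 2
    | 1%N, 1%N => (3/2) * y 2
    | 2%N, 0%N => - 10 * y 2 * y 7 - (1/2) * y 0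
    | 2%N, 1%N => - 25 * y 7 * y 7 + (2/3) * y 5 - (1/3) * y 1
    | 2%N, 2%N => - y 2
    | 3%N, 0%N => 2 * y 2 * y 2
    | 3%N, 1%N => 5 * y 2 * y 7 + y 0
    | 3%N, 3%N => (3/2) * y 2
    | 4%N, 0%N => (2/3) * y 2 * y 5 - (4/3) * y 1 * y 2 - 10 * y 0 * y 7
    | 4%N, 1%N => (20/3) * y 5 * y 7 + y 3 - 2 * y 2 * y 6 - (40/3) * y 1 * y 7
    | 4%N, 2%N => - 10 * y 2 * y 7 - (1/2) * y 0
    | 4%N, 3%N => - 50 * y 7 * y 7 + (4/3) * y 5 - (2/3) * y 1
    | 4%N, 4%N => - y 2
    | _, _ => 0 end)
  | 5%N => mx5 (fun i j => match i, j with
    | 1%N, 0%N => (40/3) * y 2 * y 7 + (2/3) * y 0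
    | 2%N, 1%N => - (20/3) * y 6 * y 7 - (1/3) * y 4
    | 3%N, 0%N => - (25/3) * y 2 * y 7 * y 7 + 3 * y 1 * y 2 + (10/3) * y 0 * y 7
    | 3%N, 2%N => (20/3) * y 2 * y 7 + (1/3) * y 0
    | 4%N, 0%N => (5/3) * y 2 * y 4 - (5/3) * y 0 * y 6
    | 4%N, 1%N => (25/3) * y 6 * y 7 * y 7 - (10/3) * y 4 * y 7 - 3 * y 1 * y 6
    | 4%N, 3%N => - (40/3) * y 6 * y 7 - (2/3) * y 4
    | _, _ => 0 end)
  | 6%N => mx5 (fun i j => match i, j with
    | 0%N, 0%N => y 6
    | 1%N, 0%N => 50 * y 7 * y 7 - (4/3) * y 5 + (2/3) * y 1
    | 1%N, 1%N => - (3/2) * y 6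
    | 2%N, 0%N => 10 * y 6 * y 7 + (1/2) * y 4
    | 2%N, 2%N => y 6
    | 3%N, 0%N => - (20/3) * y 5 * y 7 - y 3 + 2 * y 2 * y 6 + (40/3) * y 1 * y 7
    | 3%N, 1%N => - 5 * y 6 * y 7 - y 4
    | 3%N, 2%N => 25 * y 7 * y 7 - (2/3) * y 5 + (1/3) * y 1
    | 3%N, 3%N => - (3/2) * y 6
    | 4%N, 0%N => - (2/3) * y 5 * y 6 + 10 * y 4 * y 7 + (4/3) * y 1 * y 6
    | 4%N, 1%N => - 2 * y 6 * y 6
    | 4%N, 2%N => 10 * y 6 * y 7 + (1/2) * y 4
    | 4%N, 4%N => y 6
    | _, _ => 0 end)
  | 7%N => mx5 (fun i j => match i, j with
    | 1%N, 0%N => - 10 * y 2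
    | 2%N, 1%N => 5 * y 6
    | 3%N, 0%N => - 5 * y 0
    | 3%N, 2%N => - 5 * y 2
    | 4%N, 1%N => 5 * y 4
    | 4%N, 3%N => 10 * y 6
    | _, _ => 0 end)
  | _ => 0
  end.

Lemma ge_correction_tr (a : nat) (y : nat -> C) : (a < 8)%N -> in_sl5 (ge_correction a y).
Proof.
rewrite /in_sl5.
do 8 (case: a => [|a]; first by move=> _; rewrite /ge_correction mxtrace_mx5 /=; field).
by [].
Qed.

Lemma slice_bracket_f (a : nat) (y : nat -> C) : (a < 8)%N -> lie (slice_bracket a y) f_std = 0.
Proof.
do 8 (case: a => [|a]; first by move=> _; rewrite /slice_bracket /f_std lie_mx5 mx5_0;
  apply: mx5_ext; case_entries; rewrite /mul5 /=; field).
by [].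
Qed.

Lemma slice_bracketE (a : nat) (y : nat -> C) : (a < 8)%N ->
  lie (slice_pt y) (ge_basis a + lie f_std (ge_correction a y)) = slice_bracket a y.
Proof.
do 8 (case: a => [|a]; first by move=> _; rewrite /slice_pt /ge_basis /f_std /ge_correction
  /slice_bracket lie_mx5 addmx5 lie_mx5; apply: mx5_ext; case_entries; rewrite /mul5 /=; field).
by [].
Qed.

Definition lambda_expr (a b : nat) : pexpr C :=
  match a, b with
  | 0%N, 1%N =>
      PConst (2500/3) * 'v_2 * 'v_7 * 'v_7 * 'v_7 + PConst (-(1000/9)) * 'v_2 * 'v_5 * 'v_7
      + PConst (-(50/3)) * 'v_2 * 'v_3 + PConst (200/3) * 'v_2 * 'v_2 * 'v_6
      + PConst (-(700/9)) * 'v_1 * 'v_2 * 'v_7 + PConst (-(250/3)) * 'v_0 * 'v_7 * 'v_7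
      + PConst (40/3) * 'v_0 * 'v_5 + PConst (-10) * 'v_0 * 'v_1
  | 0%N, 2%N =>
      PConst (-(250/3)) * 'v_2 * 'v_7 * 'v_7 + PConst 30 * 'v_1 * 'v_2
      + PConst (-(50/3)) * 'v_0 * 'v_7
  | 0%N, 3%N =>
      PConst (6250/3) * 'v_7 * 'v_7 * 'v_7 * 'v_7 + PConst (-(2500/9)) * 'v_5 * 'v_7 * 'v_7
      + PConst (-(100/3)) * 'v_3 * 'v_7 + PConst (400/3) * 'v_2 * 'v_6 * 'v_7
      + PConst (20/3) * 'v_2 * 'v_4 + PConst (-(2500/9)) * 'v_1 * 'v_7 * 'v_7
      + PConst 20 * 'v_1 * 'v_5 + PConst (-10) * 'v_1 * 'v_1 + PConst (20/3) * 'v_0 * 'v_6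
  | 0%N, 4%N =>
      PConst (-20) * 'v_2 * 'v_2
  | 0%N, 5%N =>
      PConst (250/3) * 'v_2 * 'v_7 * 'v_7 + PConst (-30) * 'v_1 * 'v_2
      + PConst (-(100/3)) * 'v_0 * 'v_7
  | 0%N, 6%N =>
      PConst (200/3) * 'v_5 * 'v_7 + PConst 10 * 'v_3 + PConst (-20) * 'v_2 * 'v_6
      + PConst (-(400/3)) * 'v_1 * 'v_7
  | 0%N, 7%N =>
      PConst 50 * 'v_0
  | 1%N, 0%N =>
      PConst (-(2500/3)) * 'v_2 * 'v_7 * 'v_7 * 'v_7 + PConst (1000/9) * 'v_2 * 'v_5 * 'v_7
      + PConst (50/3) * 'v_2 * 'v_3 + PConst (-(200/3)) * 'v_2 * 'v_2 * 'v_6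
      + PConst (700/9) * 'v_1 * 'v_2 * 'v_7 + PConst (250/3) * 'v_0 * 'v_7 * 'v_7
      + PConst (-(40/3)) * 'v_0 * 'v_5 + PConst 10 * 'v_0 * 'v_1
  | 1%N, 2%N =>
      PConst (50/3) * 'v_2 * 'v_4 + PConst (-(50/3)) * 'v_0 * 'v_6
  | 1%N, 3%N =>
      PConst (2500/3) * 'v_6 * 'v_7 * 'v_7 * 'v_7 + PConst (-(1000/9)) * 'v_5 * 'v_6 * 'v_7
      + PConst (-(250/3)) * 'v_4 * 'v_7 * 'v_7 + PConst (40/3) * 'v_4 * 'v_5
      + PConst (-(50/3)) * 'v_3 * 'v_6 + PConst (200/3) * 'v_2 * 'v_6 * 'v_6
      + PConst (-(700/9)) * 'v_1 * 'v_6 * 'v_7 + PConst (-10) * 'v_1 * 'v_4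
  | 1%N, 4%N =>
      PConst (-(20/3)) * 'v_2 * 'v_5 + PConst (40/3) * 'v_1 * 'v_2 + PConst 100 * 'v_0 * 'v_7
  | 1%N, 5%N =>
      PConst (-(50/3)) * 'v_2 * 'v_4 + PConst (50/3) * 'v_0 * 'v_6
  | 1%N, 6%N =>
      PConst (20/3) * 'v_5 * 'v_6 + PConst (-100) * 'v_4 * 'v_7 + PConst (-(40/3)) * 'v_1 * 'v_6
  | 2%N, 0%N =>
      PConst (250/3) * 'v_2 * 'v_7 * 'v_7 + PConst (-30) * 'v_1 * 'v_2
      + PConst (50/3) * 'v_0 * 'v_7
  | 2%N, 1%N =>
      PConst (-(50/3)) * 'v_2 * 'v_4 + PConst (50/3) * 'v_0 * 'v_6
  | 2%N, 3%N =>
      PConst (-(250/3)) * 'v_6 * 'v_7 * 'v_7 + PConst (-(50/3)) * 'v_4 * 'v_7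
      + PConst 30 * 'v_1 * 'v_6
  | 2%N, 4%N =>
      PConst (-50) * 'v_2 * 'v_7 + PConst (-10) * 'v_0
  | 2%N, 6%N =>
      PConst 50 * 'v_6 * 'v_7 + PConst 10 * 'v_4
  | 3%N, 0%N =>
      PConst (-(6250/3)) * 'v_7 * 'v_7 * 'v_7 * 'v_7 + PConst (2500/9) * 'v_5 * 'v_7 * 'v_7
      + PConst (100/3) * 'v_3 * 'v_7 + PConst (-(400/3)) * 'v_2 * 'v_6 * 'v_7
      + PConst (-(20/3)) * 'v_2 * 'v_4 + PConst (2500/9) * 'v_1 * 'v_7 * 'v_7
      + PConst (-20) * 'v_1 * 'v_5 + PConst 10 * 'v_1 * 'v_1 + PConst (-(20/3)) * 'v_0 * 'v_6
  | 3%N, 1%N =>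
      PConst (-(2500/3)) * 'v_6 * 'v_7 * 'v_7 * 'v_7 + PConst (1000/9) * 'v_5 * 'v_6 * 'v_7
      + PConst (250/3) * 'v_4 * 'v_7 * 'v_7 + PConst (-(40/3)) * 'v_4 * 'v_5
      + PConst (50/3) * 'v_3 * 'v_6 + PConst (-(200/3)) * 'v_2 * 'v_6 * 'v_6
      + PConst (700/9) * 'v_1 * 'v_6 * 'v_7 + PConst 10 * 'v_1 * 'v_4
  | 3%N, 2%N =>
      PConst (250/3) * 'v_6 * 'v_7 * 'v_7 + PConst (50/3) * 'v_4 * 'v_7
      + PConst (-30) * 'v_1 * 'v_6
  | 3%N, 4%N =>
      PConst (-(200/3)) * 'v_5 * 'v_7 + PConst (-10) * 'v_3 + PConst 20 * 'v_2 * 'v_6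
      + PConst (400/3) * 'v_1 * 'v_7
  | 3%N, 5%N =>
      PConst (-(250/3)) * 'v_6 * 'v_7 * 'v_7 + PConst (100/3) * 'v_4 * 'v_7
      + PConst 30 * 'v_1 * 'v_6
  | 3%N, 6%N =>
      PConst 20 * 'v_6 * 'v_6
  | 3%N, 7%N =>
      PConst (-50) * 'v_4
  | 4%N, 0%N =>
      PConst 20 * 'v_2 * 'v_2
  | 4%N, 1%N =>
      PConst (20/3) * 'v_2 * 'v_5 + PConst (-(40/3)) * 'v_1 * 'v_2 + PConst (-100) * 'v_0 * 'v_7
  | 4%N, 2%N =>
      PConst 50 * 'v_2 * 'v_7 + PConst 10 * 'v_0
  | 4%N, 3%N =>
      PConst (200/3) * 'v_5 * 'v_7 + PConst 10 * 'v_3 + PConst (-20) * 'v_2 * 'v_6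
      + PConst (-(400/3)) * 'v_1 * 'v_7
  | 4%N, 5%N =>
      PConst (-200) * 'v_2 * 'v_7 + PConst (-10) * 'v_0
  | 4%N, 6%N =>
      PConst (-750) * 'v_7 * 'v_7 + PConst 20 * 'v_5 + PConst (-10) * 'v_1
  | 4%N, 7%N =>
      PConst 150 * 'v_2
  | 5%N, 0%N =>
      PConst (-(250/3)) * 'v_2 * 'v_7 * 'v_7 + PConst 30 * 'v_1 * 'v_2
      + PConst (100/3) * 'v_0 * 'v_7
  | 5%N, 1%N =>
      PConst (50/3) * 'v_2 * 'v_4 + PConst (-(50/3)) * 'v_0 * 'v_6
  | 5%N, 3%N =>
      PConst (250/3) * 'v_6 * 'v_7 * 'v_7 + PConst (-(100/3)) * 'v_4 * 'v_7
      + PConst (-30) * 'v_1 * 'v_6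
  | 5%N, 4%N =>
      PConst 200 * 'v_2 * 'v_7 + PConst 10 * 'v_0
  | 5%N, 6%N =>
      PConst (-200) * 'v_6 * 'v_7 + PConst (-10) * 'v_4
  | 6%N, 0%N =>
      PConst (-(200/3)) * 'v_5 * 'v_7 + PConst (-10) * 'v_3 + PConst 20 * 'v_2 * 'v_6
      + PConst (400/3) * 'v_1 * 'v_7
  | 6%N, 1%N =>
      PConst (-(20/3)) * 'v_5 * 'v_6 + PConst 100 * 'v_4 * 'v_7 + PConst (40/3) * 'v_1 * 'v_6
  | 6%N, 2%N =>
      PConst (-50) * 'v_6 * 'v_7 + PConst (-10) * 'v_4
  | 6%N, 3%N =>
      PConst (-20) * 'v_6 * 'v_6
  | 6%N, 4%N =>
      PConst 750 * 'v_7 * 'v_7 + PConst (-20) * 'v_5 + PConst 10 * 'v_1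
  | 6%N, 5%N =>
      PConst 200 * 'v_6 * 'v_7 + PConst 10 * 'v_4
  | 6%N, 7%N =>
      PConst (-150) * 'v_6
  | 7%N, 0%N =>
      PConst (-50) * 'v_0
  | 7%N, 3%N =>
      PConst 50 * 'v_4
  | 7%N, 4%N =>
      PConst (-150) * 'v_2
  | 7%N, 6%N =>
      PConst 150 * 'v_6
  | _, _ => PConst 0
  end%pe.

Lemma pdeg_lambda_expr (a b : nat) : (pdeg (lambda_expr a b) <= 4)%N.
Proof. by do 9 (case: a => [|a]; first by do 9 (case: b => [|b] //)). Qed.

Lemma peval_lambda_expr (a b : nat) (y : nat -> C) : (a < 8)%N -> (b < 8)%N ->
  peval id y (lambda_expr a b) = killing (slice_bracket a y) (ge_basis b).
Proof.
rewrite /killing.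
do 8 (case: a => [|a]; [do 8 (case: b => [|b]; first by move=> _ _;
  rewrite /slice_bracket /ge_basis mulmx5 mxtrace_mx5 /mul5 /=; field); by [] | ]).
by [].
Qed.

Definition lambda_t4 (a b : nat) : C :=
  match a, b with 0%N, 3%N => 6250/3 | 3%N, 0%N => -(6250/3) | _, _ => 0 end.
Definition lambda_t2 (a b : nat) : C :=
  match a, b with 4%N, 6%N => -750 | 6%N, 4%N => 750 | _, _ => 0 end.

Lemma peval_lambda_expr_line (a b : nat) (t : C) : (a < 8)%N -> (b < 8)%N ->
  peval id (fun i => if i == 7%N then t else 0) (lambda_expr a b) =
  lambda_t4 a b * t ^+ 4 + lambda_t2 a b * t ^+ 2.
Proof.
do 8 (case: a => [|a]; [do 8 (case: b => [|b]; first by move=> _ _;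
  rewrite /= /lambda_t4 /lambda_t2 /=; field); by [] | ]).
by [].
Qed.

End SliceComputations.

Section TransverseStd.
Variable C : numClosedFieldType.
Local Notation e_std := (@e_std C).
Local Notation f_std := (@f_std C).
Local Notation ge_basis := (@ge_basis C).
Local Notation gf_basis := (@gf_basis C).
Local Notation lambda_expr := (@lambda_expr C).
Variables (Z : 'I_8 -> 'M[C]_5) (X : 'I_16 -> 'M[C]_5) (Zbar : 'I_8 -> 'M[C]_5).
Hypotheses (hZ : is_basis_of (centralizer e_std) Z) (hX : is_basis_of (image_ad f_std) X)
  (hD : is_dual_Zpart Z X Zbar).

Lemma image_ad_X (c : 'I_16 -> C) : image_ad f_std (\sum_l c l *: X l).
Proof. by apply: image_ad_sum => l; apply: image_adZ; case: hX. Qed.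

(* [Zbar s] is orthogonal to [Im ad f], so [ad f (Zbar s)] is orthogonal to [sl5]. *)
Lemma lie_f_Zbar s : lie f_std (Zbar s) = 0.
Proof.
case: hD => _ _ dX.
suff T0 : lie (Zbar s) f_std = 0 by rewrite lieC T0 oppr0.
apply: killing_nondeg => [|V tV]; first exact: in_sl5_lie.
rewrite -killing_lie.
apply: (is_basis_of_lin0 (phi := killing (Zbar s)) hX) => [a U W||]; last by exists V.
  by rewrite killingDr killingZr.
exact: dX.
Qed.

Definition Zcoord (i : 'I_8) (a : nat) : C := ge_coord (Z i) a.
Definition Zbar_coord (s : 'I_8) (a : nat) : C := gf_coord (Zbar s) a.

Lemma Z_expand i : Z i = \sum_(a < 8) Zcoord i a *: ge_basis a.
Proof. by case: hZ => inZ _ _; case: (inZ i) => t l; exact: centralizer_e_std_span. Qed.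

Lemma Zbar_expand s : Zbar s = \sum_(a < 8) Zbar_coord s a *: gf_basis a.
Proof. by case: hD => t _ _; apply: centralizer_f_std_span => //; exact: lie_f_Zbar. Qed.

Definition Zcoord_mx : 'M[C]_8 := \matrix_(i, a) Zcoord i a.
Definition Zbar_coord_mx : 'M[C]_8 := \matrix_(s, a) Zbar_coord s a.
Definition pairing_mx : 'M[C]_8 := \matrix_(a, b) gf_ge_pairing C a b.

Lemma coord_duality : Zbar_coord_mx *m pairing_mx *m Zcoord_mx^T = 1%:M.
Proof.
apply/matrixP => s j; rewrite !mxE.
case: hD => _ dZ _; rewrite -dZ Zbar_expand Z_expand killing_suml.
transitivity (\sum_(a < 8) \sum_(k < 8) Zbar_coord s a * gf_ge_pairing C a k * Zcoord j k).
  rewrite exchange_big /=; apply: eq_bigr => k _; rewrite !mxE big_distrl /=.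
  by apply: eq_bigr => a _; rewrite !mxE.
apply: eq_bigr => a _; rewrite killing_sumr; apply: eq_bigr => k _.
by rewrite killingZl killingZr killing_gf_ge //; ring.
Qed.

Lemma Zcoord_mx_unit : Zcoord_mx \in unitmx.
Proof.
have := coord_duality; rewrite -mulmxA => /mulmx1_unit [_].
by rewrite unitmx_mul unitmx_tr => /andP[].
Qed.

Lemma Zbar_coord_mx_unit : Zbar_coord_mx \in unitmx.
Proof. by have := coord_duality; rewrite -mulmxA => /mulmx1_unit []. Qed.

Definition slice_y (q : 'I_8 -> C) (k : nat) : C := \sum_s q s * Zbar_coord s k.

Definition nf_pt q := e_std + qpoint Zbar q.

Lemma nf_ptE q : nf_pt q = slice_pt (slice_y q).
Proof.
rewrite /nf_pt -slice_ptE; congr (_ + _); rewrite /qpoint.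
under eq_bigr => s _ do rewrite Zbar_expand scaler_sumr.
rewrite exchange_big /=; apply: eq_bigr => a _.
by rewrite /slice_y scaler_suml; apply: eq_bigr => s _; rewrite scalerA.
Qed.

Lemma nf_nondeg q U :
  image_ad f_std U -> (forall l, killing (nf_pt q) (lie U (X l)) = 0) -> U = 0.
Proof.
move=> iU h; apply: (@slice_nondeg _ (slice_y q)) => //; rewrite -nf_ptE.
apply: killing_nondeg => [|W tW]; first exact: in_sl5_lie.
rewrite -!killing_lie.
apply: (is_basis_of_lin0 (phi := fun V => killing (nf_pt q) (lie U V)) hX) => [a V V'||].
- by rewrite lieDr lieZr killingDr killingZr.
- exact: h.
- by exists W.
Qed.

Lemma C_N_unit q : C_N e_std X Zbar q \in unitmx.
Proof.
rewrite -row_free_unit; apply: inj_row_free => v hv.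
have comb0 : \sum_l v 0 l *: X l = 0.
  apply: (@nf_nondeg q); first exact: image_ad_X.
  move=> m; have := congr1 (fun M : 'rV[C]_16 => M 0 m) hv; rewrite !mxE => <-.
  rewrite lie_suml killing_sumr; apply: eq_bigr => l _.
  by rewrite !mxE lieZl killingZr.
by case: hX => _ free _; apply/rowP => l; rewrite mxE (free (fun l => v 0 l)).
Qed.

Lemma killing_e_lie_Z i V : killing e_std (lie (Z i) V) = 0.
Proof.
case: hZ => inZ _ _; case: (inZ i) => _ l.
by rewrite killing_lie lieC l oppr0 killing0l.
Qed.

Definition schur_coef q : 'M[C]_(8, 16) :=
  (D_N Z X Zbar q)^T *m invmx (C_N e_std X Zbar q).

Definition schur_vec q i := Z i + \sum_l schur_coef q i l *: X l.

Lemma schur_vec_orth q i m : killing (nf_pt q) (lie (schur_vec q i) (X m)) = 0.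
Proof.
rewrite /schur_vec lieDl killingDr lie_suml killing_sumr.
rewrite (eq_bigr (fun l => schur_coef q i l * C_N e_std X Zbar q l m)) => [|l _]; last first.
  by rewrite lieZl killingZr /C_N mxE.
have -> : \sum_l schur_coef q i l * C_N e_std X Zbar q l m =
    (schur_coef q *m C_N e_std X Zbar q) i m by rewrite mxE.
rewrite /schur_coef.
rewrite -mulmxA mulVmx ?C_N_unit // mulmx1 !mxE.
by rewrite /nf_pt killingDl killing_e_lie_Z add0r lieC killingNr addNr.
Qed.

Lemma Lambda_N_schur q i j :
  Lambda_N e_std Z X Zbar q i j = killing (nf_pt q) (lie (schur_vec q i) (Z j)).
Proof.
rewrite /Lambda_N mxE /schur_vec lieDl killingDr lie_suml killing_sumr.
congr (_ + _); first by rewrite /A_N mxE /nf_pt killingDl (killing_e_lie_Z i) add0r.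
rewrite mxE; apply: eq_bigr => l _; rewrite lieZl killingZr; congr (_ * _).
by rewrite /D_N mxE /nf_pt killingDl (lieC (X l)) !killingNr (killing_e_lie_Z j) oppr0 add0r.
Qed.

Definition corrected_ge q (a : nat) : 'M[C]_5 :=
  ge_basis a + lie f_std (ge_correction a (slice_y q)).

Lemma corrected_ge_orth q (a : 'I_8) m : killing (nf_pt q) (lie (corrected_ge q a) (X m)) = 0.
Proof.
case: hX => inX _ _; case: (inX m) => W [_ ->].
by rewrite killing_lie nf_ptE slice_bracketE // killing_lie slice_bracket_f // killing0l.
Qed.

(* Both sides differ by an element of [Im ad f] orthogonal to [X]. *)
Lemma schur_vecE q i : schur_vec q i = \sum_(a < 8) Zcoord i a *: corrected_ge q a.
Proof.
apply/eqP; rewrite -subr_eq0; apply/eqP/(@nf_nondeg q) => [|m]; last first.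
  rewrite lieBl killingBr schur_vec_orth lie_suml killing_sumr big1 ?subrr // => a _.
  by rewrite lieZl killingZr corrected_ge_orth mulr0.
rewrite /corrected_ge (eq_bigr (fun a : 'I_8 => Zcoord i a *: ge_basis a +
  Zcoord i a *: lie f_std (ge_correction a (slice_y q)))) => [|a _]; last by rewrite scalerDr.
rewrite big_split /= -Z_expand /schur_vec opprD addrACA subrr add0r.
apply: image_adB; first exact: image_ad_X.
by apply: image_ad_sum => a; apply: image_adZ; exists (ge_correction a (slice_y q));
  split; first exact: ge_correction_tr.
Qed.

Lemma Lambda_N_coordE q i j : Lambda_N e_std Z X Zbar q i j =
  \sum_(a < 8) \sum_(b < 8) Zcoord i a * Zcoord j b * peval id (slice_y q) (lambda_expr a b).
Proof.
rewrite Lambda_N_schur schur_vecE lie_suml killing_sumr; apply: eq_bigr => a _.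
rewrite lieZl killingZr {1}(Z_expand j) lie_sumr killing_sumr big_distrr /=.
apply: eq_bigr => b _.
by rewrite lieZr killingZr killing_lie nf_ptE slice_bracketE // peval_lambda_expr // mulrA.
Qed.

Definition slice_ylin (k : nat) : {mpoly C[8]} := \sum_s Zbar_coord s k *: 'X_s.

Definition Lambda_poly : 'M[{mpoly C[8]}]_8 := \matrix_(i, j)
  \sum_(a < 8) \sum_(b < 8) (Zcoord i a * Zcoord j b) *:
    peval (fun c => c%:MP) slice_ylin (lambda_expr a b).

Lemma Lambda_polyE q i j : Lambda_N e_std Z X Zbar q i j = (Lambda_poly i j).@[q].
Proof.
have ylinE k : (slice_ylin k).@[q] = slice_y q k.
  by rewrite /slice_ylin raddf_sum; apply: eq_bigr => s _ /=; rewrite mevalZ mevalXU mulrC.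
rewrite Lambda_N_coordE mxE raddf_sum; apply: eq_bigr => a _ /=.
rewrite raddf_sum; apply: eq_bigr => b _ /=.
by rewrite mevalZ meval_peval (eq_peval _ _ ylinE).
Qed.

Lemma msize_Lambda_poly i j : (msize (Lambda_poly i j) <= 5)%N.
Proof.
have ylin_size k : (msize (slice_ylin k) <= 2)%N.
  apply: leq_trans (msize_sum _ _ _) _; apply/bigmax_leqP_seq => s _ _.
  by apply: leq_trans (msizeZ_le _ _) _; rewrite msizeX mdeg1.
rewrite mxE; apply: leq_trans (msize_sum _ _ _) _; apply/bigmax_leqP_seq => a _ _.
apply: leq_trans (msize_sum _ _ _) _; apply/bigmax_leqP_seq => b _ _.
apply: leq_trans (msizeZ_le _ _) _; apply: leq_trans (msize_peval _ ylin_size) _.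
by rewrite ltnS pdeg_lambda_expr.
Qed.

(* Along the line of [q] with [y q = t e_7], the entry (i0, j0) of [Lambda_N]
   is [c4 t^4 + c2 t^2], where [c4] is 6250/3 times a 2x2 minor of the
   invertible [Zcoord_mx], chosen non-zero. *)
Lemma msize_Lambda_poly_gt4 : exists i j, (4 < msize (Lambda_poly i j))%N.
Proof.
have ab : (inord 0 : 'I_8) != inord 3 by rewrite -(inj_eq val_inj) /= !inordK.
have [i0 [j0]] := unitmx_minor2 ab Zcoord_mx_unit; rewrite !mxE !inordK // => minor0.
exists i0, j0; rewrite ltnNge; apply/negP => size_le4.
pose w : 'rV[C]_8 := delta_mx 0 (inord 7) *m invmx Zbar_coord_mx.
pose qt (t : C) := fun s => t * w 0 s.
have Zbar_coord_ge8 s k : (8 <= k)%N -> Zbar_coord s k = 0.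
  by case: k => [|[|[|[|[|[|[|[|k]]]]]]]].
have line_y t k : slice_y (qt t) k = if k == 7%N then t else 0.
  have [hk|hk] := ltnP k 8; last first.
    rewrite /slice_y big1 => [|s _]; last by rewrite Zbar_coord_ge8 // mulr0.
    by case: eqP hk => // ->.
  have -> : (if k == 7%N then t else 0) = t * (w *m Zbar_coord_mx) 0 (inord k).
    rewrite mulmxKV ?Zbar_coord_mx_unit // mxE eqxx -(inj_eq val_inj) /= !inordK //.
    by case: eqP; rewrite ?mulr1 ?mulr0.
  by rewrite /slice_y mxE mulr_sumr; apply: eq_bigr => s _; rewrite /qt !mxE inordK // mulrA.
set c4 := \sum_(a < 8) \sum_(b < 8) Zcoord i0 a * Zcoord j0 b * lambda_t4 C a b.
set c2 := \sum_(a < 8) \sum_(b < 8) Zcoord i0 a * Zcoord j0 b * lambda_t2 C a b.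
have Lambda_line t : Lambda_N e_std Z X Zbar (qt t) i0 j0 = c4 * t ^+ 4 + c2 * t ^+ 2.
  rewrite Lambda_N_coordE /c4 /c2 !mulr_suml -big_split; apply: eq_bigr => a _.
  rewrite !mulr_suml -big_split; apply: eq_bigr => b _.
  by rewrite (eq_peval _ _ (line_y t)) peval_lambda_expr_line //=; ring.
have c4E : c4 = 6250 / 3 * (Zcoord i0 0 * Zcoord j0 3 - Zcoord i0 3 * Zcoord j0 0).
  by rewrite /c4 !big_ord8 !inordK // /lambda_t4 /=; field.
have [r [size_r r_line]] := mpoly_restrict_line (Lambda_poly i0 j0) (w 0).
have rE : r = c4 *: 'X^4 + c2 *: 'X^2.
  apply: poly_horner_inj => t; rewrite -r_line -[(fun s => t * w 0 s)]/(qt t).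
  by rewrite -Lambda_polyE Lambda_line hornerD !hornerZ !hornerXn.
have : r`_4 = c4 by rewrite rE coefD !coefZ !coefXn /= mulr1 mulr0 addr0.
rewrite nth_default ?(leq_trans size_r) // => /esym/eqP; apply/negP.
by rewrite c4E !mulf_neq0 ?invr_eq0 ?pnatr_eq0.
Qed.

Lemma transverse_f_std :
  (forall q, C_N e_std X Zbar q \in unitmx) /\
  exists P : 'M[{mpoly C[8]}]_8,
    (forall (q : 'I_8 -> C) (i j : 'I_8), Lambda_N e_std Z X Zbar q i j = (P i j).@[q]) /\
    (\max_(i < 8) \max_(j < 8) msize (P i j))%N = 5%N.
Proof.
split; first exact: C_N_unit.
exists Lambda_poly; split; first exact: Lambda_polyE.
apply/eqP; rewrite eqn_leq; apply/andP; split.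
  by apply/bigmax_leqP => i _; apply/bigmax_leqP => j _; exact: msize_Lambda_poly.
have [i0 [j0 gt4]] := msize_Lambda_poly_gt4.
apply: leq_trans gt4 _; apply: leq_trans (leq_bigmax i0).
exact: (leq_bigmax (F := fun j => msize (Lambda_poly i0 j)) j0).
Qed.

End TransverseStd.

Theorem mainTheorem8 (C : numClosedFieldType) :
  conormal (e32 C) /\
  forall h f : 'M[C]_5, is_sl2_triple h (e32 C) f ->
  forall (Z : 'I_8 -> 'M[C]_5) (X : 'I_16 -> 'M[C]_5) (Zbar : 'I_8 -> 'M[C]_5),
    is_basis_of (centralizer (e32 C)) Z ->
    is_basis_of (image_ad f) X ->
    is_dual_Zpart Z X Zbar ->
    (forall q : 'I_8 -> C, C_N (e32 C) X Zbar q \in unitmx) /\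
    exists P : 'M[{mpoly C[8]}]_8,
      (forall (q : 'I_8 -> C) (i j : 'I_8),
          Lambda_N (e32 C) Z X Zbar q i j = (P i j).@[q]) /\
      (\max_(i < 8) \max_(j < 8) msize (P i j))%N = 5%N.
Proof.
split; first exact: conormal_e32.
rewrite e32_std => h f triple Z X Zbar hZ hX hD.
have [g [gi [ggi gig conj_e conj_f]]] := sl2_triple_std triple.
have conj_e' : mxconj gi g (e_std C) = e_std C by rewrite -{1}conj_e mxconjK.
have cent Y : centralizer (e_std C) Y -> centralizer (e_std C) (mxconj g gi Y).
  by move/(centralizer_conj ggi); rewrite conj_e.
have cent' Y : centralizer (e_std C) Y -> centralizer (e_std C) (mxconj gi g Y).
  by move/(centralizer_conj gig); rewrite conj_e'.
have img Y : image_ad f Y -> image_ad (f_std C) (mxconj g gi Y).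
  by move/(image_ad_conj ggi); rewrite conj_f.
have img' Y : image_ad (f_std C) Y -> image_ad f (mxconj gi g Y).
  by move/(image_ad_conj gig); rewrite -conj_f mxconjK.
have [CN_unit [P [HP size_P]]] := transverse_f_std (is_basis_of_conj ggi gig cent cent' hZ)
  (is_basis_of_conj ggi gig img img' hX) (is_dual_Zpart_conj ggi hD).
split=> [q|]; first by rewrite -(C_N_conj ggi) conj_e.
by exists P; split=> // q i j; rewrite -(Lambda_N_conj ggi) conj_e.
Qed.
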